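(* Let $U\subset\mathbb{R}^2$ be open and let $f=u+iv$ be a holomorphic function of $\xi+i\eta$ on $U$ ($u,v$ real). Then the function $$F(x)=u(x_0,|\vec x|)+\frac{\vec x}{|\vec x|}\,v(x_0,|\vec x|),$$ defined for paravectors $x=x_0+\vec x$ with $\vec x\neq0$ and $(x_0,|\vec x|)\in U$, is holomorphic Cliffordian.
   Context: $\mathbb{R}_{0,3}$ is the real Clifford algebra generated by $e_1,e_2,e_3$ with $e_ie_j+e_je_i=-2\delta_{ij}$; $e_0=1$. A paravector is $x=x_0+\vec x$ with $\vec x=x_1e_1+x_2e_2+x_3e_3$, $|\vec x|=(x_1^2+x_2^2+x_3^2)^{1/2}$; paravectors are identified with $\mathbb{R}^4$. With $D=\sum_{i=0}^3 e_i\partial/\partial x_i$ and $\Delta=\sum_{i=0}^3\partial^2/\partial x_i^2$, a function is holomorphic Cliffordian if $D\Delta F=0$. *)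

From Stdlib Require Import Reals List.
From Coquelicot Require Import Coquelicot.
Open Scope R_scope.

(** * The Clifford algebra R_{0,3}
    An element is given by its 8 real coordinates on the basis blades
    e_1^{a1} e_2^{a2} e_3^{a3} (a1,a2,a3 booleans); e.g. the blade
    (false,false,false) is e_0 = 1, (true,false,false) is e_1,
    (true,true,false) is e_1 e_2, ... *)
Definition Cl := bool -> bool -> bool -> R.

Definition b2R (b : bool) : R := if b then 1 else 0.
Definition sumb (g : bool -> R) : R := g true + g false.

(* sign of e_A e_B = sign * e_{A xor B}, using e_i e_j = - e_j e_i (i<>j)
   and e_i^2 = -1 : exponent = (#transpositions) + |A cap B| *)
Definition nb (b : bool) : nat := if b then 1%nat else 0%nat.
Definition blade_sign (a1 a2 a3 b1 b2 b3 : bool) : R :=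
  (-1) ^ (nb a2 * nb b1 + nb a3 * nb b1 + nb a3 * nb b2
          + nb a1 * nb b1 + nb a2 * nb b2 + nb a3 * nb b3).

Definition cl_add (x y : Cl) : Cl := fun c1 c2 c3 => x c1 c2 c3 + y c1 c2 c3.
Definition cl_zero : Cl := fun _ _ _ => 0.

Definition cl_mul (x y : Cl) : Cl := fun c1 c2 c3 =>
  sumb (fun a1 => sumb (fun a2 => sumb (fun a3 =>
    blade_sign a1 a2 a3 (xorb a1 c1) (xorb a2 c2) (xorb a3 c3)
    * x a1 a2 a3 * y (xorb a1 c1) (xorb a2 c2) (xorb a3 c3)))).

Definition blade (a1 a2 a3 : bool) : Cl := fun c1 c2 c3 =>
  if andb (andb (Bool.eqb a1 c1) (Bool.eqb a2 c2)) (Bool.eqb a3 c3) then 1 else 0.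

Definition gen (k : nat) : Cl :=
  match k with
  | 0 => blade false false false
  | 1 => blade true false false
  | 2 => blade false true false
  | _ => blade false false true
  end.

Definition para (a0 a1 a2 a3 : R) : Cl := fun c1 c2 c3 =>
  match c1, c2, c3 with
  | false, false, false => a0
  | true, false, false => a1
  | false, true, false => a2
  | false, false, true => a3
  | _, _, _ => 0
  end.

Definition R4 := (R * R * R * R)%type.

Definition coord (x : R4) (k : nat) : R :=
  let '(a, b, c, d) := x in
  match k with 0 => a | 1 => b | 2 => c | _ => d end.

Definition setc (x : R4) (k : nat) (t : R) : R4 :=
  let '(a, b, c, d) := x in
  match k with
  | 0 => (t, b, c, d) | 1 => (a, t, c, d) | 2 => (a, b, t, d) | _ => (a, b, c, t)
  end.

Definition vnorm (x : R4) : R :=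
  sqrt (coord x 1 ^ 2 + coord x 2 ^ 2 + coord x 3 ^ 2).

Definition pd (k : nat) (g : R4 -> R) (x : R4) : R :=
  Derive (fun t => g (setc x k t)) (coord x k).

Definition iter_pd (ks : list nat) (g : R4 -> R) : R4 -> R :=
  fold_right pd g ks.

Definition smooth_on (Om : R4 -> Prop) (g : R4 -> R) : Prop :=
  forall (ks : list nat) (x : R4), Om x ->
    continuous (iter_pd ks g) x /\
    forall k, (k < 4)%nat -> ex_derive (fun t => iter_pd ks g (setc x k t)) (coord x k).

Definition pdC (k : nat) (G : R4 -> Cl) (x : R4) : Cl :=
  fun c1 c2 c3 => pd k (fun y => G y c1 c2 c3) x.

Definition Lap (G : R4 -> Cl) (x : R4) : Cl :=
  cl_add (pdC 0 (pdC 0 G) x) (cl_add (pdC 1 (pdC 1 G) x)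
    (cl_add (pdC 2 (pdC 2 G) x) (pdC 3 (pdC 3 G) x))).

Definition Dop (G : R4 -> Cl) (x : R4) : Cl :=
  cl_add (cl_mul (gen 0) (pdC 0 G x)) (cl_add (cl_mul (gen 1) (pdC 1 G x))
    (cl_add (cl_mul (gen 2) (pdC 2 G x)) (cl_mul (gen 3) (pdC 3 G x)))).

Definition holomorphic_cliffordian (Om : R4 -> Prop) (F : R4 -> Cl) : Prop :=
  (forall c1 c2 c3, smooth_on Om (fun x => F x c1 c2 c3)) /\
  forall x, Om x -> Dop (Lap F) x = cl_zero.

Definition holomorphic_on (U : C -> Prop) (f : C -> C) : Prop :=
  forall z, U z -> ex_derive (K := C_AbsRing) (V := C_NormedModule) f z.

From Stdlib Require Import Reals Lra ZArith List ClassicalEpsilon FunctionalExtensionality.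
From Coquelicot Require Import Coquelicot.
Open Scope R_scope.

(* Holomorphic functions are infinitely complex differentiable: by Goursat's
   theorem (which tolerates one point where only continuity is known) and
   Cauchy's integral formula on a square, [f z] is locally a constant multiple of
   [∮ f(w) / (w - z) dw], which may be differentiated twice under the integral
   sign.  Writing [u_n + i v_n] for the [n]-th derivative of [f], the chain rule
   and the Cauchy-Riemann equations show that every partial derivative of every
   component of [F] is a polynomial in [x_k], [|x|], [1/|x|] and the values of
   [u_n], [v_n] at [(x_0, |x|)].  Such expressions are closed under a symbolic
   derivation [∂_k]; this gives smoothness, and reduces [D Δ F = 0] to eight
   polynomial identities modulo [x_1^2 + x_2^2 + x_3^2 = |x|^2]. *)

(** * Continuity and complex differentiability *)

Lemma C_ext (z w : C) : fst z = fst w -> snd z = snd w -> z = w.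
Proof. destruct z, w; simpl; intros; subst; auto. Qed.

Lemma Rabs_snd_le_Cmod (z : C) : Rabs (snd z) <= Cmod z.
Proof. eapply Rle_trans; [apply Rmax_r | apply Rmax_Cmod]. Qed.

Lemma Cmod_le_Rabs_fst_snd (z : C) : Cmod z <= Rabs (fst z) + Rabs (snd z).
Proof.
  unfold Cmod. rewrite <- (sqrt_Rsqr (Rabs (fst z) + Rabs (snd z)))
    by (pose proof (Rabs_pos (fst z)); pose proof (Rabs_pos (snd z)); lra).
  apply sqrt_le_1_alt. unfold Rsqr. simpl.
  pose proof (Rabs_pos (fst z)); pose proof (Rabs_pos (snd z)).
  pose proof (pow2_abs (fst z)); pose proof (pow2_abs (snd z)). simpl in *. nra.
Qed.

Lemma Cmod_minus_sym (a b : C) : Cmod (a - b) = Cmod (b - a).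
Proof. rewrite <- Cmod_opp. f_equal. ring. Qed.

Lemma Cmod_triangle_minus (a b : C) : Cmod (a - b) <= Cmod a + Cmod b.
Proof. unfold Cminus. rewrite <- (Cmod_opp b). apply Cmod_triangle. Qed.

Lemma Cmod_minus_ge (a b : C) : Cmod a - Cmod b <= Cmod (a - b).
Proof.
  pose proof (Cmod_triangle (a - b) b) as H.
  replace (a - b + b)%C with a in H by ring. lra.
Qed.

Lemma Cmod_minus_horizontal (s t y : R) : Cmod ((s, y) - (t, y))%C = Rabs (s - t).
Proof. rewrite <- Cmod_R. f_equal. apply C_ext; simpl; ring. Qed.

Lemma Cmod_minus_vertical (s t x : R) : Cmod ((x, s) - (x, t))%C = Rabs (s - t).
Proof.
  rewrite <- (Cmod_R (s - t)), <- (Rmult_1_l (Cmod (RtoC (s - t)))), <- Cmod_Ci, <- Cmod_mult.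
  f_equal. apply C_ext; simpl; ring.
Qed.

Lemma Cminus_neq_0_small (a h : C) : Cmod h < Cmod a -> (a - h)%C <> RtoC 0.
Proof.
  intros H E. assert (a = h) as ->.
  { replace a with (a - h + h)%C by ring. rewrite E. ring. }
  lra.
Qed.

Section MetricContinuity.
Context {T : Type} (dist : T -> T -> R).

Definition metric_continuous (f : T -> C) (x : T) : Prop :=
  forall eps, 0 < eps -> exists del, 0 < del /\
    forall y, dist y x < del -> Cmod (f y - f x) < eps.

Lemma metric_continuous_const (c : C) x : metric_continuous (fun _ => c) x.
Proof.
  intros eps Heps. exists 1. split; [lra|]. intros y _.
  replace (c - c)%C with (RtoC 0) by ring. rewrite Cmod_0. lra.
Qed.

Lemma metric_continuous_plus f g x :
  metric_continuous f x -> metric_continuous g x ->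
  metric_continuous (fun y => f y + g y)%C x.
Proof.
  intros Hf Hg eps Heps.
  destruct (Hf (eps / 2)) as [d1 [Hd1 F1]]; [lra|].
  destruct (Hg (eps / 2)) as [d2 [Hd2 G2]]; [lra|].
  exists (Rmin d1 d2). split; [apply Rmin_pos; auto|].
  intros y Hy. apply Rmin_Rgt in Hy as [Hy1 Hy2].
  replace (f y + g y - (f x + g x))%C with ((f y - f x) + (g y - g x))%C by ring.
  eapply Rle_lt_trans; [apply Cmod_triangle|].
  specialize (F1 y Hy1). specialize (G2 y Hy2). lra.
Qed.

Lemma metric_continuous_bounded f x : metric_continuous f x ->
  exists del, 0 < del /\ forall y, dist y x < del -> Cmod (f y) <= Cmod (f x) + 1.
Proof.
  intros Hf. destruct (Hf 1 Rlt_0_1) as [del [Hdel H]]. exists del. split; auto.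
  intros y Hy. specialize (H y Hy).
  replace (f y) with ((f y - f x) + f x)%C by ring.
  eapply Rle_trans; [apply Cmod_triangle|]. lra.
Qed.

Lemma metric_continuous_mult f g x :
  metric_continuous f x -> metric_continuous g x ->
  metric_continuous (fun y => f y * g y)%C x.
Proof.
  intros Hf Hg eps Heps.
  set (A := Cmod (f x) + 1). set (B := Cmod (g x) + 1).
  assert (HA : 0 < A) by (unfold A; pose proof (Cmod_ge_0 (f x)); lra).
  assert (HB : 0 < B) by (unfold B; pose proof (Cmod_ge_0 (g x)); lra).
  destruct (metric_continuous_bounded f x Hf) as [d0 [Hd0 F0]].
  destruct (Hg (eps / (2 * A))) as [d1 [Hd1 G1]]; [apply Rdiv_lt_0_compat; lra|].
  destruct (Hf (eps / (2 * B))) as [d2 [Hd2 F2]]; [apply Rdiv_lt_0_compat; lra|].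
  exists (Rmin d0 (Rmin d1 d2)). split; [repeat apply Rmin_pos; auto|].
  intros y Hy. apply Rmin_Rgt in Hy as [Hy0 Hy]. apply Rmin_Rgt in Hy as [Hy1 Hy2].
  specialize (F0 y Hy0). specialize (G1 y Hy1). specialize (F2 y Hy2). fold A in F0.
  replace (f y * g y - f x * g x)%C with (f y * (g y - g x) + (f y - f x) * g x)%C by ring.
  eapply Rle_lt_trans; [apply Cmod_triangle|]. rewrite !Cmod_mult.
  assert (Cmod (f y) * Cmod (g y - g x) <= A * (eps / (2 * A)))
    by (apply Rmult_le_compat; try apply Cmod_ge_0; lra).
  assert (Cmod (f y - f x) * Cmod (g x) < eps / (2 * B) * B).
  { apply Rle_lt_trans with (Cmod (f y - f x) * B).
    - apply Rmult_le_compat_l; [apply Cmod_ge_0 | unfold B; lra].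
    - apply Rmult_lt_compat_r; lra. }
  assert (A * (eps / (2 * A)) = eps / 2) by (field; lra).
  assert (eps / (2 * B) * B = eps / 2) by (field; lra).
  lra.
Qed.

Lemma metric_continuous_scal (c : C) f x :
  metric_continuous f x -> metric_continuous (fun y => c * f y)%C x.
Proof. apply metric_continuous_mult, metric_continuous_const. Qed.

Lemma metric_continuous_minus f g x :
  metric_continuous f x -> metric_continuous g x ->
  metric_continuous (fun y => f y - g y)%C x.
Proof.
  intros Hf Hg eps Heps.
  destruct (metric_continuous_plus f (fun y => RtoC (-1) * g y)%C x Hf
              (metric_continuous_scal _ g x Hg) eps Heps) as [del [Hdel H]].
  exists del. split; auto. intros y Hy.
  replace (f y - g y - (f x - g x))%C
    with (f y + RtoC (-1) * g y - (f x + RtoC (-1) * g x))%C by ring.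
  auto.
Qed.

End MetricContinuity.

Notation ccontinuous := (metric_continuous (fun w z : C => Cmod (w - z))).
Notation rcontinuous := (metric_continuous (fun s t : R => Rabs (s - t))).

Lemma ccontinuous_horizontal g t y :
  ccontinuous g (t, y) -> rcontinuous (fun s => g (s, y)) t.
Proof.
  intros H eps Heps. destruct (H eps Heps) as [d [Hd G]]. exists d. split; auto.
  intros s Hs. apply G. cbv beta. rewrite Cmod_minus_horizontal. auto.
Qed.

Lemma ccontinuous_vertical g x t :
  ccontinuous g (x, t) -> rcontinuous (fun s => g (x, s)) t.
Proof.
  intros H eps Heps. destruct (H eps Heps) as [d [Hd G]]. exists d. split; auto.
  intros s Hs. apply G. cbv beta. rewrite Cmod_minus_vertical. auto.
Qed.

Lemma rcontinuous_re_im (f : R -> C) t : rcontinuous f t ->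
  continuous (fun s => fst (f s)) t /\ continuous (fun s => snd (f s)) t.
Proof.
  intros H. split; apply continuity_pt_filterlim; intros eps Heps;
    destruct (H eps Heps) as [d [Hd G]]; exists d; split; auto;
    intros s [_ Hs]; eapply Rle_lt_trans; try apply (G s Hs).
  - apply (re_le_Cmod (f s - f t)).
  - apply (Rabs_snd_le_Cmod (f s - f t)).
Qed.

Definition is_cderiv (g : C -> C) (z l : C) : Prop :=
  forall eps, 0 < eps -> exists del, 0 < del /\
    forall h, Cmod h < del -> Cmod (g (z + h) - g z - l * h)%C <= eps * Cmod h.

Lemma is_cderiv_quadratic (g : C -> C) (z l : C) (K r : R) : 0 < r ->
  (forall h, Cmod h < r -> Cmod (g (z + h) - g z - l * h)%C <= K * (Cmod h * Cmod h)) ->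
  is_cderiv g z l.
Proof.
  intros Hr H eps Heps.
  set (K' := Rabs K + 1).
  assert (HK' : 0 < K') by (unfold K'; pose proof (Rabs_pos K); lra).
  exists (Rmin r (eps / K')). split; [apply Rmin_pos; auto; apply Rdiv_lt_0_compat; auto|].
  intros h Hh. apply Rmin_Rgt in Hh as [H1 H2].
  eapply Rle_trans; [apply H; auto|].
  pose proof (Cmod_ge_0 h).
  assert (K <= K') by (unfold K'; pose proof (Rle_abs K); lra).
  assert (Cmod h * K' <= eps).
  { apply (Rmult_lt_compat_r K') in H2; auto.
    unfold Rdiv in H2. rewrite Rmult_assoc, Rinv_l in H2; lra. }
  nra.
Qed.

Lemma is_cderiv_ccontinuous (g : C -> C) (z l : C) : is_cderiv g z l -> ccontinuous g z.
Proof.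
  intros H eps Heps.
  destruct (H 1 Rlt_0_1) as [d [Hd Hg]].
  set (M := Cmod l + 1).
  assert (HM : 0 < M) by (unfold M; pose proof (Cmod_ge_0 l); lra).
  exists (Rmin d (eps / M)). split; [apply Rmin_pos; auto; apply Rdiv_lt_0_compat; auto|].
  intros w Hw. apply Rmin_Rgt in Hw as [H1 H2].
  specialize (Hg _ H1). replace (z + (w - z))%C with w in Hg by ring.
  replace (g w - g z)%C with ((g w - g z - l * (w - z)) + l * (w - z))%C by ring.
  eapply Rle_lt_trans; [apply Cmod_triangle|]. rewrite Cmod_mult.
  assert (Cmod (w - z) * M < eps).
  { apply (Rmult_lt_compat_r M) in H2; auto.
    unfold Rdiv in H2. rewrite Rmult_assoc, Rinv_l in H2; lra. }
  unfold M in *. pose proof (Cmod_ge_0 (w - z)). nra.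
Qed.

Lemma is_cderiv_ext (g1 g2 : C -> C) (z l : C) (r : R) : 0 < r ->
  (forall w, Cmod (w - z) < r -> g1 w = g2 w) -> is_cderiv g1 z l -> is_cderiv g2 z l.
Proof.
  intros Hr E H eps Heps. destruct (H eps Heps) as [d [Hd Hg]].
  exists (Rmin d r). split; [apply Rmin_pos; auto|].
  intros h Hh. apply Rmin_Rgt in Hh as [H1 H2].
  rewrite <- !E; auto.
  - replace (z - z)%C with (RtoC 0) by ring. rewrite Cmod_0. lra.
  - replace (z + h - z)%C with h by ring. auto.
Qed.

Lemma is_cderiv_unique (g : C -> C) (z l1 l2 : C) :
  is_cderiv g z l1 -> is_cderiv g z l2 -> l1 = l2.
Proof.
  intros H1 H2. apply Ceq_minus, Cmod_eq_0.
  apply Rle_antisym; [|apply Cmod_ge_0]. apply Rnot_lt_le. intro Hp.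
  set (e := Cmod (l1 - l2) / 4).
  assert (He : 0 < e) by (unfold e; lra).
  destruct (H1 e He) as [d1 [Hd1 G1]]. destruct (H2 e He) as [d2 [Hd2 G2]].
  set (t := Rmin d1 d2 / 2).
  assert (Ht : 0 < t) by (unfold t; pose proof (Rmin_pos d1 d2 Hd1 Hd2); lra).
  assert (Htm : Cmod (RtoC t) = t) by (rewrite Cmod_R; apply Rabs_right; lra).
  assert (t < d1) by (unfold t; pose proof (Rmin_l d1 d2); lra).
  assert (t < d2) by (unfold t; pose proof (Rmin_r d1 d2); lra).
  specialize (G1 (RtoC t)). specialize (G2 (RtoC t)). rewrite Htm in G1, G2.
  assert (Hb : Cmod ((l1 - l2) * t)%C <= 2 * e * t).
  { replace ((l1 - l2) * t)%C
      with ((g (z + t) - g z - l2 * t) - (g (z + t) - g z - l1 * t))%C by ring.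
    eapply Rle_trans; [apply Cmod_triangle_minus|]. specialize (G1 ltac:(lra)).
    specialize (G2 ltac:(lra)). lra. }
  rewrite Cmod_mult, Htm in Hb. unfold e in Hb. nra.
Qed.

Lemma is_cderiv_plus (f g : C -> C) z lf lg : is_cderiv f z lf -> is_cderiv g z lg ->
  is_cderiv (fun w => f w + g w)%C z (lf + lg)%C.
Proof.
  intros Hf Hg eps Heps.
  destruct (Hf (eps / 2)) as [d1 [Hd1 F1]]; [lra|].
  destruct (Hg (eps / 2)) as [d2 [Hd2 G2]]; [lra|].
  exists (Rmin d1 d2). split; [apply Rmin_pos; auto|].
  intros h Hh. apply Rmin_Rgt in Hh as [H1 H2].
  replace (f (z + h) + g (z + h) - (f z + g z) - (lf + lg) * h)%C
    with ((f (z + h) - f z - lf * h) + (g (z + h) - g z - lg * h))%C by ring.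
  eapply Rle_trans; [apply Cmod_triangle|].
  specialize (F1 h H1). specialize (G2 h H2). lra.
Qed.

Lemma is_cderiv_const (c z : C) : is_cderiv (fun _ => c) z (RtoC 0).
Proof.
  apply (is_cderiv_quadratic _ _ _ 0 1); [lra|]. intros h _.
  replace (c - c - 0 * h)%C with (RtoC 0) by ring. rewrite Cmod_0. lra.
Qed.

Lemma is_cderiv_mult (f g : C -> C) z lf lg : is_cderiv f z lf -> is_cderiv g z lg ->
  is_cderiv (fun w => f w * g w)%C z (lf * g z + f z * lg)%C.
Proof.
  intros Hf Hg eps Heps.
  assert (Cf := is_cderiv_ccontinuous _ _ _ Hf).
  set (A := Cmod (f z) + 1). set (B := Cmod (g z) + 1). set (L := Cmod lg + 1).
  assert (HA : 0 < A) by (unfold A; pose proof (Cmod_ge_0 (f z)); lra).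
  assert (HB : 0 < B) by (unfold B; pose proof (Cmod_ge_0 (g z)); lra).
  assert (HL : 0 < L) by (unfold L; pose proof (Cmod_ge_0 lg); lra).
  destruct (metric_continuous_bounded _ f z Cf) as [d0 [Hd0 F0]].
  destruct (Hg (eps / (3 * A))) as [d1 [Hd1 G1]]; [apply Rdiv_lt_0_compat; lra|].
  destruct (Hf (eps / (3 * B))) as [d2 [Hd2 F2]]; [apply Rdiv_lt_0_compat; lra|].
  destruct (Cf (eps / (3 * L))) as [d3 [Hd3 F3]]; [apply Rdiv_lt_0_compat; lra|].
  exists (Rmin (Rmin d0 d1) (Rmin d2 d3)). split; [repeat apply Rmin_pos; auto|].
  intros h Hh. apply Rmin_Rgt in Hh as [Hh Hh'].
  apply Rmin_Rgt in Hh as [H0 H1]. apply Rmin_Rgt in Hh' as [H2 H3].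
  assert (Ez : (z + h - z)%C = h) by ring.
  specialize (F0 (z + h)%C). specialize (F3 (z + h)%C). cbv beta in F0, F3.
  rewrite Ez in F0, F3. specialize (F0 H0). specialize (F3 H3). fold A in F0.
  specialize (G1 h H1). specialize (F2 h H2). pose proof (Cmod_ge_0 h).
  replace (f (z + h) * g (z + h) - f z * g z - (lf * g z + f z * lg) * h)%C
    with (f (z + h) * (g (z + h) - g z - lg * h) + (f (z + h) - f z) * (lg * h)
          + g z * (f (z + h) - f z - lf * h))%C by ring.
  eapply Rle_trans; [apply Cmod_triangle|].
  eapply Rle_trans; [apply Rplus_le_compat_r, Cmod_triangle|]. rewrite !Cmod_mult.
  assert (Cmod (f (z + h)%C) * Cmod (g (z + h)%C - g z - lg * h) <= eps / 3 * Cmod h).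
  { apply Rle_trans with (A * (eps / (3 * A) * Cmod h)).
    - apply Rmult_le_compat; try apply Cmod_ge_0; auto.
    - right. field. lra. }
  assert (Cmod (f (z + h)%C - f z) * (Cmod lg * Cmod h) <= eps / 3 * Cmod h).
  { rewrite <- Rmult_assoc. apply Rmult_le_compat_r; auto.
    apply Rle_trans with (eps / (3 * L) * L).
    - apply Rmult_le_compat; try apply Cmod_ge_0; try lra. unfold L; lra.
    - right. field. lra. }
  assert (Cmod (g z) * Cmod (f (z + h)%C - f z - lf * h) <= eps / 3 * Cmod h).
  { apply Rle_trans with (B * (eps / (3 * B) * Cmod h)).
    - apply Rmult_le_compat; try apply Cmod_ge_0; auto. unfold B; lra.
    - right. field. lra. }
  lra.
Qed.

Lemma is_cderiv_scal (c : C) (f : C -> C) z l :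
  is_cderiv f z l -> is_cderiv (fun w => c * f w)%C z (c * l)%C.
Proof.
  intros Hf. replace (c * l)%C with (0 * f z + c * l)%C by ring.
  apply is_cderiv_mult; auto. apply is_cderiv_const.
Qed.

Lemma is_cderiv_minus (f g : C -> C) z lf lg : is_cderiv f z lf -> is_cderiv g z lg ->
  is_cderiv (fun w => f w - g w)%C z (lf - lg)%C.
Proof.
  intros Hf Hg eps Heps.
  destruct (is_cderiv_plus f (fun w => RtoC (-1) * g w)%C z lf (RtoC (-1) * lg)%C Hf
              (is_cderiv_scal _ g z lg Hg) eps Heps) as [d [Hd H]].
  exists d. split; auto. intros h Hh.
  replace (f (z + h) - g (z + h) - (f z - g z) - (lf - lg) * h)%C
    with (f (z + h) + RtoC (-1) * g (z + h) - (f z + RtoC (-1) * g z)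
          - (lf + RtoC (-1) * lg) * h)%C by ring.
  auto.
Qed.

Lemma Cinv_expansion_bound (A h : C) r : 0 < r -> 2 * r <= Cmod A -> Cmod h < r ->
  Cmod (/ (A - h) - / A - h * (/ A * / A))%C <= / (r * r * r) * (Cmod h * Cmod h).
Proof.
  intros Hr HA Hh.
  assert (HA0 : A <> RtoC 0) by (apply Cmod_gt_0; lra).
  assert (HAh : (A - h)%C <> RtoC 0) by (apply Cminus_neq_0_small; lra).
  pose proof (Cmod_minus_ge A h). pose proof (Cmod_ge_0 h).
  replace (/ (A - h) - / A - h * (/ A * / A))%C with (h * h / (A * A * (A - h)))%C
    by (field; auto).
  rewrite Cmod_div, !Cmod_mult by (repeat apply Cmult_neq_0; auto).
  unfold Rdiv. rewrite Rmult_comm. apply Rmult_le_compat_r; [nra|].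
  apply Rinv_le_contravar; [apply Rmult_lt_0_compat; nra | apply Rmult_le_compat; nra].
Qed.

Lemma Cinv_sq_expansion_bound (A h : C) r : 0 < r -> 2 * r <= Cmod A -> Cmod h < r ->
  Cmod (/ (A - h) * / (A - h) - / A * / A - h * (RtoC 2 * (/ A * / A * / A)))%C
    <= 4 * / (r * r * r * r) * (Cmod h * Cmod h).
Proof.
  intros Hr HA Hh.
  assert (HA0 : A <> RtoC 0) by (apply Cmod_gt_0; lra).
  assert (HAh : (A - h)%C <> RtoC 0) by (apply Cminus_neq_0_small; lra).
  pose proof (Cmod_minus_ge A h). pose proof (Cmod_ge_0 h).
  replace (/ (A - h) * / (A - h) - / A * / A - h * (RtoC 2 * (/ A * / A * / A)))%C
    with (h * h * (RtoC 3 * A - RtoC 2 * h) / (A * A * A * ((A - h) * (A - h))))%C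
    by (field; auto).
  rewrite Cmod_div, !Cmod_mult by (repeat apply Cmult_neq_0; auto).
  assert (Hn : Cmod (RtoC 3 * A - RtoC 2 * h) <= 4 * Cmod A).
  { eapply Rle_trans; [apply Cmod_triangle_minus|].
    rewrite !Cmod_mult, !Cmod_R, !Rabs_right by lra. lra. }
  set (a := Cmod A) in *. set (b := Cmod (A - h)) in *. set (x := Cmod h) in *.
  set (n := Cmod (RtoC 3 * A - RtoC 2 * h)) in *.
  assert (Hn0 : 0 <= n) by apply Cmod_ge_0.
  assert (Hpos : 0 < a * a * a * (b * b)) by (repeat apply Rmult_lt_0_compat; lra).
  unfold Rdiv. apply Rle_trans with (x * x * (4 * a) * / (a * a * a * (b * b))).
  { apply Rmult_le_compat_r; [left; apply Rinv_0_lt_compat; auto|].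
    apply Rmult_le_compat_l; nra. }
  replace (x * x * (4 * a) * / (a * a * a * (b * b)))
    with (4 * / (a * a * (b * b)) * (x * x)) by (field; nra).
  apply Rmult_le_compat_r; [nra|]. apply Rmult_le_compat_l; [lra|].
  apply Rinv_le_contravar; [repeat apply Rmult_lt_0_compat; lra|].
  replace (r * r * r * r) with ((r * r) * (r * r)) by ring.
  apply Rmult_le_compat; nra.
Qed.

Lemma is_cderiv_inv_shift (p z : C) : z <> p ->
  is_cderiv (fun w => / (w - p))%C z (- (/ (z - p) * / (z - p)))%C.
Proof.
  intros Hz. set (A := (z - p)%C).
  assert (HA : 0 < Cmod A) by (apply Cmod_gt_0, Cminus_eq_contra; auto).
  apply (is_cderiv_quadratic _ _ _ (/ (Cmod A / 2 * (Cmod A / 2) * (Cmod A / 2))) (Cmod A / 2));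
    [lra|].
  intros h Hh.
  replace (z + h - p)%C with (A - - h)%C by (unfold A; ring). change (z - p)%C with A.
  replace (/ (A - - h) - / A - - (/ A * / A) * h)%C
    with (/ (A - - h) - / A - - h * (/ A * / A))%C by ring.
  rewrite <- (Cmod_opp h). apply Cinv_expansion_bound; try lra. rewrite Cmod_opp. lra.
Qed.

Lemma ccontinuous_inv_shift (p z : C) : z <> p -> ccontinuous (fun w => / (w - p))%C z.
Proof. intros H. exact (is_cderiv_ccontinuous _ _ _ (is_cderiv_inv_shift p z H)). Qed.

(** * Integrals along segments *)

Definition rcontinuous_on (f : R -> C) (a b : R) : Prop :=
  forall t, Rmin a b <= t <= Rmax a b -> rcontinuous f t.

Lemma rcontinuous_on_scal c f a b : rcontinuous_on f a b ->
  rcontinuous_on (fun s => c * f s)%C a b.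
Proof. intros Hf t Ht. apply metric_continuous_scal; auto. Qed.

Lemma rcontinuous_on_minus f g a b : rcontinuous_on f a b -> rcontinuous_on g a b ->
  rcontinuous_on (fun s => f s - g s)%C a b.
Proof. intros Hf Hg t Ht. apply metric_continuous_minus; auto. Qed.

Lemma ex_RInt_re_im f a b : rcontinuous_on f a b ->
  ex_RInt (fun t => fst (f t)) a b /\ ex_RInt (fun t => snd (f t)) a b.
Proof.
  intros H. split; apply (ex_RInt_continuous (V := R_CompleteNormedModule));
    intros t Ht; apply (rcontinuous_re_im f t (H t Ht)).
Qed.

Definition cint (f : R -> C) (a b : R) : C :=
  (RInt (fun t => fst (f t)) a b, RInt (fun t => snd (f t)) a b).

Lemma RInt_Rplus (F G : R -> R) a b : ex_RInt F a b -> ex_RInt G a b ->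
  RInt (fun t => F t + G t) a b = RInt F a b + RInt G a b.
Proof.
  intros. apply (is_RInt_unique (V := R_CompleteNormedModule)).
  apply (is_RInt_plus (V := R_NormedModule));
    now apply (RInt_correct (V := R_CompleteNormedModule)).
Qed.

Lemma RInt_Rminus (F G : R -> R) a b : ex_RInt F a b -> ex_RInt G a b ->
  RInt (fun t => F t - G t) a b = RInt F a b - RInt G a b.
Proof.
  intros. apply (is_RInt_unique (V := R_CompleteNormedModule)).
  apply (is_RInt_minus (V := R_NormedModule));
    now apply (RInt_correct (V := R_CompleteNormedModule)).
Qed.

Lemma RInt_Rmult_l (F : R -> R) k a b : ex_RInt F a b ->
  RInt (fun t => k * F t) a b = k * RInt F a b.
Proof.
  intros. apply (is_RInt_unique (V := R_CompleteNormedModule)).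
  apply (is_RInt_scal (V := R_NormedModule));
    now apply (RInt_correct (V := R_CompleteNormedModule)).
Qed.

Lemma ex_RInt_Rmult_l (F : R -> R) k a b : ex_RInt F a b -> ex_RInt (fun t => k * F t) a b.
Proof. apply (ex_RInt_scal (V := R_NormedModule)). Qed.

Lemma cint_ext f g a b : (forall t, Rmin a b <= t <= Rmax a b -> f t = g t) ->
  cint f a b = cint g a b.
Proof.
  intros H. apply C_ext; simpl; apply RInt_ext; intros t Ht; rewrite H; auto; lra.
Qed.

Lemma cint_plus f g a b : rcontinuous_on f a b -> rcontinuous_on g a b ->
  cint (fun t => f t + g t)%C a b = (cint f a b + cint g a b)%C.
Proof.
  intros Hf Hg. destruct (ex_RInt_re_im f a b Hf), (ex_RInt_re_im g a b Hg).
  apply C_ext; simpl; apply RInt_Rplus; auto.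
Qed.

Lemma cint_scal c f a b : rcontinuous_on f a b ->
  cint (fun t => c * f t)%C a b = (c * cint f a b)%C.
Proof.
  intros Hf. destruct (ex_RInt_re_im f a b Hf) as [E1 E2].
  apply C_ext; simpl.
  - rewrite (RInt_Rminus (fun t => fst c * fst (f t)) (fun t => snd c * snd (f t)))
      by (apply ex_RInt_Rmult_l; auto).
    rewrite !RInt_Rmult_l; auto.
  - rewrite (RInt_Rplus (fun t => fst c * snd (f t)) (fun t => snd c * fst (f t)))
      by (apply ex_RInt_Rmult_l; auto).
    rewrite !RInt_Rmult_l; auto.
Qed.

Lemma cint_minus f g a b : rcontinuous_on f a b -> rcontinuous_on g a b ->
  cint (fun t => f t - g t)%C a b = (cint f a b - cint g a b)%C.
Proof.
  intros Hf Hg.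
  rewrite (cint_ext _ (fun t => f t + RtoC (-1) * g t)%C) by (intros; ring).
  rewrite cint_plus, cint_scal; auto.
  - ring.
  - apply rcontinuous_on_scal; auto.
Qed.

Lemma cint_Chasles f a b c : rcontinuous_on f a b -> rcontinuous_on f b c ->
  (cint f a b + cint f b c)%C = cint f a c.
Proof.
  intros H1 H2. destruct (ex_RInt_re_im f a b H1), (ex_RInt_re_im f b c H2).
  apply C_ext; simpl; apply (RInt_Chasles (V := R_CompleteNormedModule)); auto.
Qed.

Lemma cint_point f a : cint f a a = RtoC 0.
Proof. unfold cint. rewrite !RInt_point. reflexivity. Qed.

Lemma cint_bound f a b M : a <= b -> rcontinuous_on f a b ->
  (forall t, a <= t <= b -> Cmod (f t) <= M) -> Cmod (cint f a b) <= 2 * (b - a) * M.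
Proof.
  intros Hab Hf HM. destruct (ex_RInt_re_im f a b Hf) as [E1 E2].
  eapply Rle_trans; [apply Cmod_le_Rabs_fst_snd|]. simpl.
  assert (Rabs (RInt (fun t => fst (f t)) a b) <= (b - a) * M).
  { apply abs_RInt_le_const; auto. intros t Ht.
    eapply Rle_trans; [apply re_le_Cmod | auto]. }
  assert (Rabs (RInt (fun t => snd (f t)) a b) <= (b - a) * M).
  { apply abs_RInt_le_const; auto. intros t Ht.
    eapply Rle_trans; [apply Rabs_snd_le_Cmod | auto]. }
  lra.
Qed.

Lemma rcontinuous_on_bounded f a b : a <= b -> rcontinuous_on f a b ->
  exists M, forall t, a <= t <= b -> Cmod (f t) <= M.
Proof.
  intros Hab Hf.
  destruct (continuity_ab_maj (fun s => Cmod (f s)) a b Hab) as [m [Hm _]].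
  - intros t Ht eps Heps.
    destruct (Hf t ltac:(rewrite Rmin_left, Rmax_right; lra) eps Heps) as [del [Hdel H]].
    exists del. split; auto. intros s [_ Hs]. simpl in *. unfold R_dist in *.
    apply Rle_lt_trans with (Cmod (f s - f t)); auto.
    pose proof (Cmod_minus_ge (f s) (f t)). pose proof (Cmod_minus_ge (f t) (f s)).
    rewrite (Cmod_minus_sym (f t)) in H1. unfold Rabs. destruct Rcase_abs; lra.
  - exists (Cmod (f m)). auto.
Qed.

Definition is_rderiv (P : R -> C) (t : R) (d : C) : Prop :=
  forall eps, 0 < eps -> exists del, 0 < del /\
    forall h, Rabs h < del -> Cmod (P (t + h)%R - P t - RtoC h * d)%C <= eps * Rabs h.

Lemma derivable_pt_lim_bound (F : R -> R) t l : derivable_pt_lim F t l ->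
  forall eps, 0 < eps -> exists del, 0 < del /\
    forall h, Rabs h < del -> Rabs (F (t + h) - F t - h * l) <= eps * Rabs h.
Proof.
  intros H eps Heps. destruct (H eps Heps) as [d Hd].
  exists d. split; [apply cond_pos|]. intros h Hh.
  destruct (Req_dec h 0) as [->|E].
  - rewrite Rplus_0_r. replace (F t - F t - 0 * l) with 0 by ring. rewrite Rabs_R0. lra.
  - specialize (Hd h E Hh).
    replace (F (t + h) - F t - h * l) with (h * ((F (t + h) - F t) / h - l)) by (field; auto).
    rewrite Rabs_mult, Rmult_comm. apply Rmult_le_compat_r; [apply Rabs_pos | lra].
Qed.

Lemma derivable_pt_lim_of_bound (F : R -> R) t l :
  (forall eps, 0 < eps -> exists del, 0 < del /\
     forall h, Rabs h < del -> Rabs (F (t + h) - F t - h * l) <= eps * Rabs h) ->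
  derivable_pt_lim F t l.
Proof.
  intros H eps Heps. destruct (H (eps / 2)) as [del [Hdel G]]; [lra|].
  exists (mkposreal del Hdel). intros h Hh0 Hh. specialize (G h Hh).
  assert (Hp : 0 < Rabs h) by (apply Rabs_pos_lt; auto).
  replace ((F (t + h) - F t) / h - l) with ((F (t + h) - F t - h * l) / h) by (field; auto).
  unfold Rdiv. rewrite Rabs_mult, Rabs_inv.
  apply Rle_lt_trans with (eps / 2 * Rabs h * / Rabs h).
  - apply Rmult_le_compat_r; [left; apply Rinv_0_lt_compat|]; auto.
  - field_simplify; lra.
Qed.

Lemma is_rderiv_re_im (P : R -> C) t d :
  is_rderiv P t d <->
  derivable_pt_lim (fun s => fst (P s)) t (fst d) /\
  derivable_pt_lim (fun s => snd (P s)) t (snd d).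
Proof.
  split.
  - intros H. split; apply derivable_pt_lim_of_bound; intros eps Heps;
      destruct (H eps Heps) as [del [Hdel G]]; exists del; split; auto;
      intros h Hh; eapply Rle_trans; try apply (G h Hh).
    + replace (fst (P (t + h)) - fst (P t) - h * fst d)
        with (fst (P (t + h)%R - P t - RtoC h * d)%C) by (simpl; ring).
      apply re_le_Cmod.
    + replace (snd (P (t + h)) - snd (P t) - h * snd d)
        with (snd (P (t + h)%R - P t - RtoC h * d)%C) by (simpl; ring).
      apply Rabs_snd_le_Cmod.
  - intros [H1 H2] eps Heps.
    destruct (derivable_pt_lim_bound _ _ _ H1 (eps / 2)) as [d1 [Hd1 G1]]; [lra|].
    destruct (derivable_pt_lim_bound _ _ _ H2 (eps / 2)) as [d2 [Hd2 G2]]; [lra|].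
    exists (Rmin d1 d2). split; [apply Rmin_pos; auto|].
    intros h Hh. apply Rmin_Rgt in Hh as [Ha Hb].
    specialize (G1 h Ha). specialize (G2 h Hb).
    eapply Rle_trans; [apply Cmod_le_Rabs_fst_snd|]. simpl.
    replace (fst (P (t + h)) + - fst (P t) + - (h * fst d - 0 * snd d))
      with (fst (P (t + h)) - fst (P t) - h * fst d) by ring.
    replace (snd (P (t + h)) + - snd (P t) + - (h * snd d + 0 * fst d))
      with (snd (P (t + h)) - snd (P t) - h * snd d) by ring.
    lra.
Qed.

Lemma is_rderiv_comp (G : C -> C) (P : R -> C) t l d :
  is_cderiv G (P t) l -> is_rderiv P t d -> is_rderiv (fun s => G (P s)) t (l * d)%C.
Proof.
  intros HG HP eps Heps.
  set (D := Cmod d + 1). set (L := Cmod l + 1).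
  assert (HD : 0 < D) by (unfold D; pose proof (Cmod_ge_0 d); lra).
  assert (HL : 0 < L) by (unfold L; pose proof (Cmod_ge_0 l); lra).
  destruct (HP 1 Rlt_0_1) as [d1 [Hd1 P1]].
  destruct (HP (eps / (2 * L))) as [d2 [Hd2 P2]]; [apply Rdiv_lt_0_compat; lra|].
  destruct (HG (eps / (2 * D))) as [d3 [Hd3 G3]]; [apply Rdiv_lt_0_compat; lra|].
  exists (Rmin d1 (Rmin d2 (d3 / D))).
  split; [repeat apply Rmin_pos; auto; apply Rdiv_lt_0_compat; auto|].
  intros h Hh. apply Rmin_Rgt in Hh as [H1 Hh]. apply Rmin_Rgt in Hh as [H2 H3].
  set (Dl := (P (t + h)%R - P t)%C).
  specialize (P1 h H1). specialize (P2 h H2). fold Dl in P1, P2.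
  pose proof (Rabs_pos h).
  assert (HDl : Cmod Dl <= D * Rabs h).
  { replace Dl with ((Dl - RtoC h * d) + RtoC h * d)%C by ring.
    eapply Rle_trans; [apply Cmod_triangle|]. rewrite Cmod_mult, Cmod_R. unfold D. nra. }
  assert (HDl3 : Cmod Dl < d3).
  { apply Rle_lt_trans with (D * Rabs h); auto.
    apply (Rmult_lt_compat_l D) in H3; auto. unfold Rdiv in H3.
    rewrite <- Rmult_assoc, (Rmult_comm D d3), Rmult_assoc, Rinv_r in H3; lra. }
  specialize (G3 Dl HDl3).
  replace (P t + Dl)%C with (P (t + h)%R) in G3 by (unfold Dl; ring).
  replace (G (P (t + h)%R) - G (P t) - RtoC h * (l * d))%C
    with ((G (P (t + h)%R) - G (P t) - l * Dl) + l * (Dl - RtoC h * d))%C by ring.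
  eapply Rle_trans; [apply Cmod_triangle|]. rewrite Cmod_mult.
  assert (eps / (2 * D) * Cmod Dl <= eps / 2 * Rabs h).
  { apply Rle_trans with (eps / (2 * D) * (D * Rabs h)).
    - apply Rmult_le_compat_l; auto. left; apply Rdiv_lt_0_compat; lra.
    - right; field; lra. }
  assert (Cmod l * Cmod (Dl - RtoC h * d) <= eps / 2 * Rabs h).
  { apply Rle_trans with (L * (eps / (2 * L) * Rabs h)).
    - apply Rmult_le_compat; try apply Cmod_ge_0; auto. unfold L; lra.
    - right; field; lra. }
  lra.
Qed.

Lemma is_rderiv_line (w v : C) t : is_rderiv (fun s => w + RtoC s * v)%C t v.
Proof.
  intros eps Heps. exists 1. split; [lra|]. intros h _.
  replace (w + RtoC (t + h) * v - (w + RtoC t * v) - RtoC h * v)%C with (RtoC 0)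
    by (rewrite RtoC_plus; ring).
  rewrite Cmod_0. pose proof (Rabs_pos h). nra.
Qed.

Lemma cint_derive (P dP : R -> C) a b :
  (forall t, Rmin a b <= t <= Rmax a b -> is_rderiv P t (dP t)) -> rcontinuous_on dP a b ->
  cint dP a b = (P b - P a)%C.
Proof.
  intros HP Hd. apply C_ext; simpl; apply is_RInt_unique.
  - apply (is_RInt_derive (fun t => fst (P t))); intros t Ht.
    + apply is_derive_Reals, (is_rderiv_re_im P t (dP t)), HP; auto.
    + apply (rcontinuous_re_im dP t), Hd; auto.
  - apply (is_RInt_derive (fun t => snd (P t))); intros t Ht.
    + apply is_derive_Reals, (is_rderiv_re_im P t (dP t)), HP; auto.
    + apply (rcontinuous_re_im dP t), Hd; auto.
Qed.

(** * Integrals along the boundary of a rectangle *)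

(* Integral of [g] along the positively oriented boundary of [[a,b] x [c,d]]. *)
Definition rect_integral (g : C -> C) (a b c d : R) : C :=
  (cint (fun t => g (t, c)) a b + Ci * cint (fun t => g (b, t)) c d
   - cint (fun t => g (t, d)) a b - Ci * cint (fun t => g (a, t)) c d)%C.

Definition on_boundary (P : C -> Prop) (a b c d : R) : Prop :=
  (forall t, a <= t <= b -> P (t, c) /\ P (t, d)) /\
  (forall t, c <= t <= d -> P (a, t) /\ P (b, t)).

Definition ccontinuous_on_rect (g : C -> C) (a b c d : R) : Prop :=
  forall x y, a <= x <= b -> c <= y <= d -> ccontinuous g (x, y).

Lemma on_boundary_impl (P Q : C -> Prop) a b c d :
  (forall w, P w -> Q w) -> on_boundary P a b c d -> on_boundary Q a b c d.
Proof.
  intros H [H1 H2]. split; intros t Ht;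
    [destruct (H1 t Ht) | destruct (H2 t Ht)]; split; auto.
Qed.

Lemma on_boundary_impl2 (P Q S : C -> Prop) a b c d :
  (forall w, P w -> Q w -> S w) ->
  on_boundary P a b c d -> on_boundary Q a b c d -> on_boundary S a b c d.
Proof.
  intros H [P1 P2] [Q1 Q2]. split; intros t Ht;
    [destruct (P1 t Ht), (Q1 t Ht) | destruct (P2 t Ht), (Q2 t Ht)]; split; auto.
Qed.

Lemma on_boundary_ccontinuous_mult f1 f2 a b c d :
  on_boundary (ccontinuous f1) a b c d -> on_boundary (ccontinuous f2) a b c d ->
  on_boundary (ccontinuous (fun w => f1 w * f2 w)%C) a b c d.
Proof. apply on_boundary_impl2. intros w. apply metric_continuous_mult. Qed.

Lemma ccontinuous_on_rect_sub g a b c d a' b' c' d' :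
  a <= a' -> b' <= b -> c <= c' -> d' <= d ->
  ccontinuous_on_rect g a b c d -> ccontinuous_on_rect g a' b' c' d'.
Proof. intros ? ? ? ? H x y Hx Hy. apply H; lra. Qed.

Lemma ccontinuous_on_rect_boundary g a b c d : a <= b -> c <= d ->
  ccontinuous_on_rect g a b c d -> on_boundary (ccontinuous g) a b c d.
Proof. intros Hab Hcd H. split; intros t Ht; split; apply H; lra. Qed.

Lemma rcontinuous_on_horizontal g y a b : a <= b ->
  (forall t, a <= t <= b -> ccontinuous g (t, y)) -> rcontinuous_on (fun s => g (s, y)) a b.
Proof.
  intros Hab H t Ht. rewrite Rmin_left, Rmax_right in Ht by lra.
  apply ccontinuous_horizontal. auto.
Qed.

Lemma rcontinuous_on_vertical g x c d : c <= d ->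
  (forall t, c <= t <= d -> ccontinuous g (x, t)) -> rcontinuous_on (fun s => g (x, s)) c d.
Proof.
  intros Hcd H t Ht. rewrite Rmin_left, Rmax_right in Ht by lra.
  apply ccontinuous_vertical. auto.
Qed.

Section RectIntegral.
Variables (a b c d : R).
Hypotheses (Hab : a <= b) (Hcd : c <= d).

Lemma rcontinuous_on_sides g : on_boundary (ccontinuous g) a b c d ->
  rcontinuous_on (fun t => g (t, c)) a b /\ rcontinuous_on (fun t => g (t, d)) a b /\
  rcontinuous_on (fun t => g (a, t)) c d /\ rcontinuous_on (fun t => g (b, t)) c d.
Proof.
  intros [H1 H2]. repeat split;
    first [ apply rcontinuous_on_horizontal | apply rcontinuous_on_vertical ]; auto;
    intros t Ht; first [ apply (H1 t Ht) | apply (H2 t Ht) ].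
Qed.

Lemma rect_integral_minus f g :
  on_boundary (ccontinuous f) a b c d -> on_boundary (ccontinuous g) a b c d ->
  rect_integral (fun w => f w - g w)%C a b c d
  = (rect_integral f a b c d - rect_integral g a b c d)%C.
Proof.
  intros Hf Hg.
  destruct (rcontinuous_on_sides f Hf) as (F1 & F2 & F3 & F4).
  destruct (rcontinuous_on_sides g Hg) as (G1 & G2 & G3 & G4).
  unfold rect_integral.
  rewrite (cint_minus (fun t => f (t, c)) (fun t => g (t, c))),
    (cint_minus (fun t => f (t, d)) (fun t => g (t, d))),
    (cint_minus (fun t => f (a, t)) (fun t => g (a, t))),
    (cint_minus (fun t => f (b, t)) (fun t => g (b, t))) by auto.
  ring.
Qed.

Lemma rect_integral_scal k g : on_boundary (ccontinuous g) a b c d ->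
  rect_integral (fun w => k * g w)%C a b c d = (k * rect_integral g a b c d)%C.
Proof.
  intros Hg. destruct (rcontinuous_on_sides g Hg) as (G1 & G2 & G3 & G4).
  unfold rect_integral.
  rewrite (cint_scal k (fun t => g (t, c))), (cint_scal k (fun t => g (t, d))),
    (cint_scal k (fun t => g (a, t))), (cint_scal k (fun t => g (b, t))) by auto.
  ring.
Qed.

Lemma rect_integral_ext f g :
  on_boundary (fun w => f w = g w) a b c d -> rect_integral f a b c d = rect_integral g a b c d.
Proof.
  intros [E1 E2]. unfold rect_integral.
  rewrite (cint_ext (fun t => f (t, c)) (fun t => g (t, c))),
    (cint_ext (fun t => f (t, d)) (fun t => g (t, d))),
    (cint_ext (fun t => f (a, t)) (fun t => g (a, t))),
    (cint_ext (fun t => f (b, t)) (fun t => g (b, t))); auto;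
    intros t Ht; rewrite ?Rmin_left, ?Rmax_right in Ht by lra;
    first [ apply (E1 t Ht) | apply (E2 t Ht) ].
Qed.

Lemma rect_integral_bound g M : on_boundary (ccontinuous g) a b c d ->
  on_boundary (fun w => Cmod (g w) <= M) a b c d ->
  Cmod (rect_integral g a b c d) <= 4 * M * ((b - a) + (d - c)).
Proof.
  intros Hg [M1 M2]. destruct (rcontinuous_on_sides g Hg) as (G1 & G2 & G3 & G4).
  assert (Cmod (cint (fun t => g (t, c)) a b) <= 2 * (b - a) * M)
    by (apply cint_bound; auto; intros t Ht; apply M1; auto).
  assert (Cmod (cint (fun t => g (t, d)) a b) <= 2 * (b - a) * M)
    by (apply cint_bound; auto; intros t Ht; apply M1; auto).
  assert (Cmod (Ci * cint (fun t => g (a, t)) c d) <= 2 * (d - c) * M)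
    by (rewrite Cmod_mult, Cmod_Ci, Rmult_1_l; apply cint_bound; auto;
        intros t Ht; apply M2; auto).
  assert (Cmod (Ci * cint (fun t => g (b, t)) c d) <= 2 * (d - c) * M)
    by (rewrite Cmod_mult, Cmod_Ci, Rmult_1_l; apply cint_bound; auto;
        intros t Ht; apply M2; auto).
  unfold rect_integral.
  eapply Rle_trans; [apply Cmod_triangle_minus|].
  eapply Rle_trans; [apply Rplus_le_compat_r, Cmod_triangle_minus|].
  eapply Rle_trans; [apply Rplus_le_compat_r, Rplus_le_compat_r, Cmod_triangle|].
  lra.
Qed.

Lemma rect_integral_primitive (G g : C -> C) :
  on_boundary (fun w => is_cderiv G w (g w) /\ ccontinuous g w) a b c d ->
  rect_integral g a b c d = RtoC 0.
Proof.
  intros H.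
  assert (Hg : on_boundary (ccontinuous g) a b c d)
    by (refine (on_boundary_impl _ _ _ _ _ _ _ H); tauto).
  assert (HG : on_boundary (fun w => is_cderiv G w (g w)) a b c d)
    by (refine (on_boundary_impl _ _ _ _ _ _ _ H); tauto).
  destruct (rcontinuous_on_sides g Hg) as (G1 & G2 & G3 & G4).
  destruct HG as [H1 H2].
  assert (Eh : forall y, (forall t, a <= t <= b -> is_cderiv G (t, y) (g (t, y))) ->
            rcontinuous_on (fun s => g (s, y)) a b ->
            cint (fun t => g (t, y)) a b = (G (b, y) - G (a, y))%C).
  { intros y Hy Hok. apply (cint_derive (fun s => G (s, y))); auto.
    intros t Ht. rewrite Rmin_left, Rmax_right in Ht by lra.
    rewrite <- (Cmult_1_r (g (t, y))). apply (is_rderiv_comp G (fun s => (s, y))); auto.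
    apply is_rderiv_re_im. split; [apply derivable_pt_lim_id | apply derivable_pt_lim_const]. }
  assert (Ev : forall x, (forall t, c <= t <= d -> is_cderiv G (x, t) (g (x, t))) ->
            rcontinuous_on (fun s => g (x, s)) c d ->
            (Ci * cint (fun t => g (x, t)) c d)%C = (G (x, d) - G (x, c))%C).
  { intros x Hx Hok. rewrite <- cint_scal; auto.
    apply (cint_derive (fun s => G (x, s))); [|apply rcontinuous_on_scal; auto].
    intros t Ht. rewrite Rmin_left, Rmax_right in Ht by lra.
    rewrite Cmult_comm. apply (is_rderiv_comp G (fun s => (x, s))); auto.
    apply is_rderiv_re_im. split; [apply derivable_pt_lim_const | apply derivable_pt_lim_id]. }
  unfold rect_integral.
  rewrite (Eh c), (Eh d), (Ev a), (Ev b); auto; try ring;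
    intros t Ht; first [apply (H1 t Ht) | apply (H2 t Ht)].
Qed.

End RectIntegral.

Lemma rect_integral_split_x g a m b c d : a <= m <= b -> c <= d ->
  ccontinuous_on_rect g a b c d ->
  rect_integral g a b c d = (rect_integral g a m c d + rect_integral g m b c d)%C.
Proof.
  intros Hm Hcd H. unfold rect_integral.
  rewrite <- (cint_Chasles (fun t => g (t, c)) a m b),
    <- (cint_Chasles (fun t => g (t, d)) a m b); try ring;
    apply rcontinuous_on_horizontal; try lra; intros t Ht; apply H; lra.
Qed.

Lemma rect_integral_split_y g a b c n d : a <= b -> c <= n <= d ->
  ccontinuous_on_rect g a b c d ->
  rect_integral g a b c d = (rect_integral g a b c n + rect_integral g a b n d)%C.
Proof.
  intros Hab Hn H. unfold rect_integral.
  rewrite <- (cint_Chasles (fun t => g (a, t)) c n d),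
    <- (cint_Chasles (fun t => g (b, t)) c n d); try ring;
    apply rcontinuous_on_vertical; try lra; intros t Ht; apply H; lra.
Qed.

Lemma rect_integral_flat_x g a c d : rect_integral g a a c d = RtoC 0.
Proof. unfold rect_integral. rewrite !cint_point. ring. Qed.

Lemma rect_integral_flat_y g a b c : rect_integral g a b c c = RtoC 0.
Proof. unfold rect_integral. rewrite !cint_point. ring. Qed.

Lemma on_boundary_bounded g a b c d : a <= b -> c <= d ->
  on_boundary (ccontinuous g) a b c d -> exists M, on_boundary (fun w => Cmod (g w) <= M) a b c d.
Proof.
  intros Hab Hcd Hg. destruct (rcontinuous_on_sides a b c d Hab Hcd g Hg) as (G1 & G2 & G3 & G4).
  destruct (rcontinuous_on_bounded _ a b Hab G1) as [M1 H1].
  destruct (rcontinuous_on_bounded _ a b Hab G2) as [M2 H2].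
  destruct (rcontinuous_on_bounded _ c d Hcd G3) as [M3 H3].
  destruct (rcontinuous_on_bounded _ c d Hcd G4) as [M4 H4].
  exists (Rmax (Rmax M1 M2) (Rmax M3 M4)).
  pose proof (Rmax_l M1 M2). pose proof (Rmax_r M1 M2). pose proof (Rmax_l M3 M4).
  pose proof (Rmax_r M3 M4). pose proof (Rmax_l (Rmax M1 M2) (Rmax M3 M4)).
  pose proof (Rmax_r (Rmax M1 M2) (Rmax M3 M4)).
  split; intros t Ht; split;
    [specialize (H1 t Ht) | specialize (H2 t Ht) | specialize (H3 t Ht) | specialize (H4 t Ht)];
    lra.
Qed.

(** * Goursat's theorem *)

Record rectangle := Rectangle { xlo : R; xhi : R; ylo : R; yhi : R }.

Definition rint (g : C -> C) (r : rectangle) : C :=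
  rect_integral g (xlo r) (xhi r) (ylo r) (yhi r).

Definition proper (r : rectangle) : Prop := xlo r <= xhi r /\ ylo r <= yhi r.

Definition subrect (r' r : rectangle) : Prop :=
  xlo r <= xlo r' /\ xhi r' <= xhi r /\ ylo r <= ylo r' /\ yhi r' <= yhi r.

Definition in_rect (r : rectangle) (z : C) : Prop :=
  xlo r <= fst z <= xhi r /\ ylo r <= snd z <= yhi r.

Definition semiperimeter (r : rectangle) : R := (xhi r - xlo r) + (yhi r - ylo r).

Definition quarter (i j : bool) (r : rectangle) : rectangle :=
  let mx := (xlo r + xhi r) / 2 in
  let my := (ylo r + yhi r) / 2 in
  Rectangle (if i then mx else xlo r) (if i then xhi r else mx)
            (if j then my else ylo r) (if j then yhi r else my).

Lemma subrect_refl r : subrect r r.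
Proof. unfold subrect. lra. Qed.

Lemma subrect_trans r1 r2 r3 : subrect r1 r2 -> subrect r2 r3 -> subrect r1 r3.
Proof. unfold subrect. lra. Qed.

Lemma quarter_spec i j r : proper r ->
  proper (quarter i j r) /\ subrect (quarter i j r) r /\
  semiperimeter (quarter i j r) = semiperimeter r / 2.
Proof.
  unfold proper, subrect, semiperimeter.
  destruct i, j; simpl; intros; repeat split; lra.
Qed.

Lemma rint_quarters g r : proper r -> ccontinuous_on_rect g (xlo r) (xhi r) (ylo r) (yhi r) ->
  rint g r = (rint g (quarter false false r) + rint g (quarter true false r)
              + rint g (quarter false true r) + rint g (quarter true true r))%C.
Proof.
  destruct r as [a b c d]. unfold proper, rint, quarter; simpl. intros [Hab Hcd] H.
  assert (Hsub : forall a' b' c' d', a <= a' -> b' <= b -> c <= c' -> d' <= d ->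
                   ccontinuous_on_rect g a' b' c' d')
    by (intros; eapply ccontinuous_on_rect_sub; [| | | | exact H]; auto).
  rewrite (rect_integral_split_x g a ((a + b) / 2) b c d),
    (rect_integral_split_y g a ((a + b) / 2) c ((c + d) / 2) d),
    (rect_integral_split_y g ((a + b) / 2) b c ((c + d) / 2) d); try ring;
    try apply Hsub; lra.
Qed.

Definition heavy_quarter (g : C -> C) (r : rectangle) : rectangle :=
  let heavy q := Rle_dec (Cmod (rint g r) / 4) (Cmod (rint g q)) in
  if heavy (quarter false false r) then quarter false false r else
  if heavy (quarter true false r) then quarter true false r else
  if heavy (quarter false true r) then quarter false true r else quarter true true r.

Lemma heavy_quarter_spec g r : proper r -> ccontinuous_on_rect g (xlo r) (xhi r) (ylo r) (yhi r) ->
  Cmod (rint g r) / 4 <= Cmod (rint g (heavy_quarter g r)) /\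
  exists i j, heavy_quarter g r = quarter i j r.
Proof.
  intros Hr H. pose proof (rint_quarters g r Hr H) as E.
  unfold heavy_quarter.
  destruct Rle_dec as [C1|C1]; [split; [|exists false, false]; auto|].
  destruct Rle_dec as [C2|C2]; [split; [|exists true, false]; auto|].
  destruct Rle_dec as [C3|C3]; [split; [|exists false, true]; auto|].
  split; [|exists true, true; auto].
  apply Rnot_lt_le. intro C4. apply Rnot_le_lt in C1, C2, C3.
  assert (Cmod (rint g r) <= Cmod (rint g (quarter false false r))
            + Cmod (rint g (quarter true false r)) + Cmod (rint g (quarter false true r))
            + Cmod (rint g (quarter true true r))).
  { rewrite E. eapply Rle_trans; [apply Cmod_triangle|]. apply Rplus_le_compat_r.
    eapply Rle_trans; [apply Cmod_triangle|]. apply Rplus_le_compat_r. apply Cmod_triangle. }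
  lra.
Qed.

Lemma nested_rectangles_point (r : nat -> rectangle) :
  (forall n, proper (r n)) -> (forall n, subrect (r (S n)) (r n)) ->
  exists z, forall n, in_rect (r n) z.
Proof.
  intros Hp Hs.
  assert (Hnest : forall n m, (n <= m)%nat -> subrect (r m) (r n)).
  { intros n m Hnm. induction Hnm; [apply subrect_refl|]. eapply subrect_trans; eauto. }
  assert (Hlo : forall n m, xlo (r n) <= xhi (r m) /\ ylo (r n) <= yhi (r m)).
  { intros n m. destruct (Nat.le_ge_cases n m) as [H|H]; apply Hnest in H;
      destruct (Hp n), (Hp m); unfold subrect in H; lra. }
  destruct (completeness (fun x => exists n, x = xlo (r n))) as [xs [Ux Lx]].
  { exists (xhi (r 0%nat)). intros x [n ->]. apply Hlo. }
  { exists (xlo (r 0%nat)), 0%nat. auto. }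
  destruct (completeness (fun y => exists n, y = ylo (r n))) as [ys [Uy Ly]].
  { exists (yhi (r 0%nat)). intros y [n ->]. apply Hlo. }
  { exists (ylo (r 0%nat)), 0%nat. auto. }
  exists (xs, ys). intros n. unfold in_rect; simpl. repeat split.
  - apply Ux. eauto.
  - apply Lx. intros x [m ->]. apply Hlo.
  - apply Uy. eauto.
  - apply Ly. intros y [m ->]. apply Hlo.
Qed.

Lemma is_cderiv_affine_primitive (c0 l zs w : C) :
  is_cderiv (fun w => c0 * w + l * (w - zs) * (w - zs) / RtoC 2)%C w (c0 + l * (w - zs))%C.
Proof.
  apply (is_cderiv_quadratic _ _ _ (Cmod l) 1); [lra|]. intros h _.
  assert (H2 : RtoC 2 <> RtoC 0) by (intro E; injection E; lra).
  replace (c0 * (w + h) + l * (w + h - zs) * (w + h - zs) / RtoC 2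
           - (c0 * w + l * (w - zs) * (w - zs) / RtoC 2) - (c0 + l * (w - zs)) * h)%C
    with (l * h * h / RtoC 2)%C by (field; auto).
  rewrite Cmod_div, !Cmod_mult, Cmod_R, Rabs_right by (auto; lra).
  pose proof (Cmod_ge_0 l); pose proof (Cmod_ge_0 h). nra.
Qed.

(* The affine part of [g] near [zs] integrates to zero, and what is left is
   [eps]-small relative to the size of [r]. *)
Lemma rint_bound_near_point g zs l eps del r :
  (forall h, Cmod h < del -> Cmod (g (zs + h) - g zs - l * h)%C <= eps * Cmod h) ->
  0 <= eps -> proper r -> in_rect r zs -> semiperimeter r < del ->
  ccontinuous_on_rect g (xlo r) (xhi r) (ylo r) (yhi r) ->
  Cmod (rint g r) <= 4 * eps * (semiperimeter r * semiperimeter r).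
Proof.
  intros Hl Heps [Hx Hy] [Hzx Hzy] Hr Hg.
  set (aff := fun w => (g zs + l * (w - zs))%C).
  assert (Caff : forall w, ccontinuous aff w).
  { intros w. apply (is_cderiv_ccontinuous _ _ l), (is_cderiv_quadratic _ _ _ 0 1); [lra|].
    intros h _. unfold aff.
    replace (g zs + l * (w + h - zs) - (g zs + l * (w - zs)) - l * h)%C with (RtoC 0) by ring.
    rewrite Cmod_0. lra. }
  assert (Bg : on_boundary (ccontinuous g) (xlo r) (xhi r) (ylo r) (yhi r))
    by (apply ccontinuous_on_rect_boundary; auto).
  assert (Baff : on_boundary (ccontinuous aff) (xlo r) (xhi r) (ylo r) (yhi r))
    by (split; intros; split; apply Caff).
  assert (Raff : rint aff r = RtoC 0).
  { unfold rint. apply (rect_integral_primitive _ _ _ _ Hx Hy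
             (fun w => g zs * w + l * (w - zs) * (w - zs) / RtoC 2)%C).
    split; intros t Ht; split; split; try apply Caff; apply is_cderiv_affine_primitive. }
  assert (Hclose : forall w, in_rect r w -> Cmod (w - zs) <= semiperimeter r).
  { intros [x y] [Hwx Hwy]. eapply Rle_trans; [apply Cmod_le_Rabs_fst_snd|].
    unfold semiperimeter; simpl in *. unfold Rabs; repeat destruct Rcase_abs; lra. }
  assert (Hsmall : forall w, in_rect r w -> Cmod (g w - aff w) <= eps * semiperimeter r).
  { intros w Hw. specialize (Hclose w Hw).
    specialize (Hl (w - zs)%C ltac:(lra)). replace (zs + (w - zs))%C with w in Hl by ring.
    unfold aff. replace (g w - (g zs + l * (w - zs)))%C with (g w - g zs - l * (w - zs))%C by ring.
    eapply Rle_trans; [exact Hl|]. apply Rmult_le_compat_l; auto. }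
  replace (rint g r) with (rint (fun w => g w - aff w)%C r)
    by (unfold rint; rewrite rect_integral_minus; auto; fold (rint aff r); rewrite Raff; ring).
  replace (4 * eps * (semiperimeter r * semiperimeter r))
    with (4 * (eps * semiperimeter r) * ((xhi r - xlo r) + (yhi r - ylo r)))
    by (unfold semiperimeter; ring).
  unfold rint. apply rect_integral_bound; auto.
  - apply (on_boundary_impl2 _ _ _ _ _ _ _ (fun w => metric_continuous_minus _ g aff w) Bg Baff).
  - split; intros t Ht; split; apply Hsmall; unfold in_rect; simpl; lra.
Qed.

Lemma ccontinuous_on_rect_of_is_cderiv g a b c d :
  (forall x y, a <= x <= b -> c <= y <= d -> exists l, is_cderiv g (x, y) l) ->
  ccontinuous_on_rect g a b c d.
Proof.
  intros Hg x y Hx Hy. destruct (Hg x y Hx Hy) as [l Hl]. eapply is_cderiv_ccontinuous; eauto.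
Qed.

Section Goursat.
Variables (g : C -> C) (a b c d : R).
Hypotheses (Hab : a <= b) (Hcd : c <= d)
  (Hg : forall x y, a <= x <= b -> c <= y <= d -> exists l, is_cderiv g (x, y) l).

Let r0 := Rectangle a b c d.
Let bisection (n : nat) : rectangle := Nat.iter n (heavy_quarter g) r0.

Let ccontinuous_on_subrect r :
  subrect r r0 -> ccontinuous_on_rect g (xlo r) (xhi r) (ylo r) (yhi r).
Proof.
  intros Hr. eapply ccontinuous_on_rect_sub; [| | | | apply ccontinuous_on_rect_of_is_cderiv, Hg];
    apply Hr.
Qed.

Lemma bisection_step n : proper (bisection n) -> subrect (bisection n) r0 ->
  Cmod (rint g (bisection n)) / 4 <= Cmod (rint g (bisection (S n))) /\
  exists i j, bisection (S n) = quarter i j (bisection n).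
Proof.
  intros Hp Hs. apply heavy_quarter_spec, ccontinuous_on_subrect; auto.
Qed.

Lemma bisection_spec n :
  proper (bisection n) /\ subrect (bisection n) r0 /\
  semiperimeter (bisection n) = semiperimeter r0 / 2 ^ n /\
  Cmod (rint g r0) / (2 ^ n * 2 ^ n) <= Cmod (rint g (bisection n)).
Proof.
  induction n as [|n IH].
  - simpl. rewrite Rmult_1_r, !Rdiv_1_r. unfold proper, subrect, r0; simpl. lra.
  - destruct IH as (Hp & Hs & Hsize & Hbound).
    destruct (bisection_step n Hp Hs) as [Hheavy [i [j Eq]]]. rewrite Eq in *.
    destruct (quarter_spec i j (bisection n) Hp) as (Hp' & Hs' & Hsize').
    pose proof (pow_lt 2 n ltac:(lra)).
    split; [exact Hp'|]. split; [eapply subrect_trans; eauto|]. split.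
    + rewrite Hsize', Hsize. simpl. field. lra.
    + eapply Rle_trans; [|exact Hheavy]. simpl.
      replace (Cmod (rint g r0) / (2 * 2 ^ n * (2 * 2 ^ n)))
        with (Cmod (rint g r0) / (2 ^ n * 2 ^ n) / 4) by (field; lra).
      lra.
Qed.

Lemma bisection_nested n : subrect (bisection (S n)) (bisection n).
Proof.
  destruct (bisection_spec n) as (Hp & Hs & _).
  destruct (bisection_step n Hp Hs) as [_ [i [j ->]]]. apply quarter_spec; auto.
Qed.

Theorem goursat : rect_integral g a b c d = RtoC 0.
Proof.
  destruct (nested_rectangles_point bisection) as [zs Hzs];
    [intros n; apply bisection_spec | apply bisection_nested |].
  destruct zs as [xs ys].
  destruct (Hzs 0%nat) as [Hxs Hys]. simpl in Hxs, Hys.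
  destruct (Hg xs ys Hxs Hys) as [l Hl].
  set (S := semiperimeter r0).
  assert (HS : 0 <= S) by (unfold S, semiperimeter; simpl; lra).
  assert (Key : forall eps, 0 < eps -> Cmod (rint g r0) <= 4 * eps * (S * S)).
  { intros eps Heps. destruct (Hl eps Heps) as [del [Hdel Gl]].
    destruct (Pow_x_infinity 2 ltac:(rewrite Rabs_right; lra) (S / del + 1)) as [n Hn].
    specialize (Hn n (le_n n)). rewrite Rabs_right in Hn by (left; apply pow_lt; lra).
    pose proof (pow_lt 2 n ltac:(lra)) as Hp.
    destruct (bisection_spec n) as (Hpr & Hsub & Hsize & Hbound). fold S in Hsize.
    assert (Hsmall : S / 2 ^ n < del).
    { apply (Rmult_lt_reg_r (2 ^ n)); auto. replace (S / 2 ^ n * 2 ^ n) with S by (field; lra).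
      replace S with (del * (S / del)) at 1 by (field; lra). nra. }
    assert (H := rint_bound_near_point g (xs, ys) l eps del (bisection n) Gl
                   ltac:(lra) Hpr (Hzs n) ltac:(lra)).
    rewrite Hsize in H.
    assert (Cmod (rint g r0) / (2 ^ n * 2 ^ n) <= 4 * eps * (S * S) / (2 ^ n * 2 ^ n)).
    { eapply Rle_trans; [exact Hbound|]. eapply Rle_trans.
      - apply H, ccontinuous_on_subrect, Hsub.
      - right. fold S. field. lra. }
    apply (Rmult_le_compat_r (2 ^ n * 2 ^ n)) in H0; [|nra].
    unfold Rdiv in H0. rewrite !Rmult_assoc, Rinv_l in H0 by nra. lra. }
  apply Cmod_eq_0, Rle_antisym; [|apply Cmod_ge_0].
  apply Rle_plus_epsilon. intros eps Heps.
  specialize (Key (eps / (4 * (S * S + 1)))).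
  change (rect_integral g a b c d) with (rint g r0).
  assert (4 * (eps / (4 * (S * S + 1))) * (S * S) <= eps).
  { apply (Rmult_le_reg_r (4 * (S * S + 1))); [nra|]. field_simplify; nra. }
  assert (0 < eps / (4 * (S * S + 1))) by (apply Rdiv_lt_0_compat; nra).
  specialize (Key H0). lra.
Qed.

End Goursat.

Lemma goursat_off_point g a b c d p : a <= b -> c <= d ->
  (forall x y, a <= x <= b -> c <= y <= d -> (x, y) <> p -> exists l, is_cderiv g (x, y) l) ->
  a = b \/ c = d \/ ~ (a <= fst p <= b /\ c <= snd p <= d) ->
  rect_integral g a b c d = RtoC 0.
Proof.
  intros Hab Hcd Hg [->|[->|Hp]]; [apply rect_integral_flat_x | apply rect_integral_flat_y |].
  apply goursat; auto. intros x y Hx Hy. apply Hg; auto. intros <-. simpl in Hp. tauto.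
Qed.

Lemma rect_integral_five_pieces g a b c d x1 x2 y1 y2 :
  a <= x1 <= x2 -> x2 <= b -> c <= y1 <= y2 -> y2 <= d -> ccontinuous_on_rect g a b c d ->
  rect_integral g a b c d =
  (rect_integral g a x1 c d + rect_integral g x2 b c d + rect_integral g x1 x2 c y1
   + rect_integral g x1 x2 y2 d + rect_integral g x1 x2 y1 y2)%C.
Proof.
  intros Hx1 Hx2 Hy1 Hy2 H.
  assert (Hsub : ccontinuous_on_rect g x1 x2 c d)
    by (eapply ccontinuous_on_rect_sub; [| | | | exact H]; lra).
  rewrite (rect_integral_split_x g a x1 b), (rect_integral_split_x g x1 x2 b),
    (rect_integral_split_y g x1 x2 c y1 d), (rect_integral_split_y g x1 x2 y1 y2 d);
    try ring; try lra; auto.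
  - eapply ccontinuous_on_rect_sub; [| | | | exact Hsub]; lra.
  - eapply ccontinuous_on_rect_sub; [| | | | exact H]; lra.
Qed.

Section GoursatPunctured.
Variables (g : C -> C) (a b c d px py : R).
Hypotheses (Hab : a <= b) (Hcd : c <= d) (Hpx : a <= px <= b) (Hpy : c <= py <= d)
  (Hcont : ccontinuous_on_rect g a b c d)
  (Hg : forall x y, a <= x <= b -> c <= y <= d -> (x, y) <> (px, py) ->
          exists l, is_cderiv g (x, y) l).

Lemma rect_integral_off_center a' b' c' d' :
  a <= a' -> b' <= b -> c <= c' -> d' <= d -> a' <= b' -> c' <= d' ->
  a' = b' \/ c' = d' \/ ~ (a' <= px <= b') \/ ~ (c' <= py <= d') ->
  rect_integral g a' b' c' d' = RtoC 0.
Proof.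
  intros. apply (goursat_off_point g a' b' c' d' (px, py)); auto.
  - intros x y Hx Hy. apply Hg; lra.
  - simpl. tauto.
Qed.

(* Only the [2 del]-square around [(px, py)] contributes, and [g] is bounded there. *)
Lemma rect_integral_punctured_bound del : 0 < del ->
  (forall w, Cmod (w - (px, py)) < 4 * del -> Cmod (g w) <= Cmod (g (px, py)) + 1) ->
  Cmod (rect_integral g a b c d) <= 16 * del * (Cmod (g (px, py)) + 1).
Proof.
  intros Hdel Hnear.
  set (x1 := Rmax a (px - del)). set (x2 := Rmin b (px + del)).
  set (y1 := Rmax c (py - del)). set (y2 := Rmin d (py + del)).
  assert (Hx1 : a <= x1 <= px /\ px - del <= x1 /\ (x1 = a \/ x1 < px)).
  { unfold x1, Rmax. destruct Rle_dec; lra. }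
  assert (Hx2 : px <= x2 <= b /\ x2 <= px + del /\ (x2 = b \/ px < x2)).
  { unfold x2, Rmin. destruct Rle_dec; lra. }
  assert (Hy1 : c <= y1 <= py /\ py - del <= y1 /\ (y1 = c \/ y1 < py)).
  { unfold y1, Rmax. destruct Rle_dec; lra. }
  assert (Hy2 : py <= y2 <= d /\ y2 <= py + del /\ (y2 = d \/ py < y2)).
  { unfold y2, Rmin. destruct Rle_dec; lra. }
  assert (Left : rect_integral g a x1 c d = RtoC 0) by (apply rect_integral_off_center; lra).
  assert (Right : rect_integral g x2 b c d = RtoC 0) by (apply rect_integral_off_center; lra).
  assert (Bottom : rect_integral g x1 x2 c y1 = RtoC 0) by (apply rect_integral_off_center; lra).
  assert (Top : rect_integral g x1 x2 y2 d = RtoC 0) by (apply rect_integral_off_center; lra).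
  rewrite (rect_integral_five_pieces g a b c d x1 x2 y1 y2), Left, Right, Bottom, Top;
    try lra; auto.
  replace (RtoC 0 + RtoC 0 + RtoC 0 + RtoC 0 + rect_integral g x1 x2 y1 y2)%C
    with (rect_integral g x1 x2 y1 y2) by ring.
  eapply Rle_trans; [apply rect_integral_bound; try lra|].
  - apply ccontinuous_on_rect_boundary; try lra.
    eapply ccontinuous_on_rect_sub; [| | | | exact Hcont]; lra.
  - assert (Hsq : forall x y, x1 <= x <= x2 -> y1 <= y <= y2 ->
                    Cmod (g (x, y)) <= Cmod (g (px, py)) + 1).
    { intros x y Hx Hy. apply Hnear. eapply Rle_lt_trans; [apply Cmod_le_Rabs_fst_snd|].
      simpl. unfold Rabs; repeat destruct Rcase_abs; lra. }
    split; intros t Ht; split; apply Hsq; lra.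
  - pose proof (Cmod_ge_0 (g (px, py))). nra.
Qed.

End GoursatPunctured.

Theorem goursat_punctured (g : C -> C) a b c d p : a <= b -> c <= d ->
  ccontinuous_on_rect g a b c d ->
  (forall x y, a <= x <= b -> c <= y <= d -> (x, y) <> p -> exists l, is_cderiv g (x, y) l) ->
  rect_integral g a b c d = RtoC 0.
Proof.
  intros Hab Hcd Hcont Hg. destruct p as [px py].
  destruct (classic (a <= px <= b /\ c <= py <= d)) as [[Hpx Hpy]|Hout].
  2:{ apply (goursat_off_point g a b c d (px, py)); auto. }
  destruct (metric_continuous_bounded _ g (px, py) (Hcont px py Hpx Hpy)) as [r [Hr Hnear]].
  set (M := Cmod (g (px, py)) + 1).
  assert (HM : 0 < M) by (unfold M; pose proof (Cmod_ge_0 (g (px, py))); lra).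
  apply Cmod_eq_0, Rle_antisym; [|apply Cmod_ge_0].
  apply Rle_plus_epsilon. intros eps Heps.
  set (del := Rmin (r / 4) (eps / (16 * M))).
  assert (Hdel : 0 < del) by (apply Rmin_pos; [lra | apply Rdiv_lt_0_compat; lra]).
  eapply Rle_trans;
    [apply (rect_integral_punctured_bound g a b c d px py Hab Hcd Hpx Hpy Hcont Hg del Hdel)|].
  - intros w Hw. apply Hnear. pose proof (Rmin_l (r / 4) (eps / (16 * M))). fold del in H. lra.
  - fold M. assert (del <= eps / (16 * M)) by apply Rmin_r.
    apply Rle_trans with (16 * (eps / (16 * M)) * M); [nra | right; field; lra].
Qed.

(** * Cauchy's integral formula on a square *)

Definition slope (g : C -> C) (z l : C) (w : C) : C :=
  if Ceq_dec w z then l else ((g w - g z) * / (w - z))%C.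

Lemma slope_is_cderiv g z l w lw : w <> z -> is_cderiv g w lw ->
  exists l', is_cderiv (slope g z l) w l'.
Proof.
  intros Hw Hg.
  assert (Hwz : 0 < Cmod (w - z)) by (apply Cmod_gt_0, Cminus_eq_contra; auto).
  eexists. apply (is_cderiv_ext (fun v => (g v - g z) * / (v - z))%C _ w _ (Cmod (w - z))); auto.
  - intros v Hv. unfold slope. destruct (Ceq_dec v z) as [->|]; auto.
    rewrite Cmod_minus_sym in Hv. lra.
  - apply is_cderiv_mult; [apply is_cderiv_minus; [exact Hg | apply is_cderiv_const]|].
    apply is_cderiv_inv_shift; auto.
Qed.

Lemma slope_ccontinuous_center g z l : is_cderiv g z l -> ccontinuous (slope g z l) z.
Proof.
  intros Hg eps Heps. destruct (Hg (eps / 2)) as [del [Hdel G]]; [lra|].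
  exists del. split; auto. intros w Hw. cbv beta in Hw.
  unfold slope. destruct (Ceq_dec z z) as [_|]; [|congruence].
  destruct (Ceq_dec w z) as [->|Hwz].
  - replace (l - l)%C with (RtoC 0) by ring. rewrite Cmod_0. lra.
  - specialize (G (w - z)%C Hw). replace (z + (w - z))%C with w in G by ring.
    assert (Hne : (w - z)%C <> RtoC 0) by (apply Cminus_eq_contra; auto).
    assert (Hpos : 0 < Cmod (w - z)) by (apply Cmod_gt_0; auto).
    replace ((g w - g z) * / (w - z) - l)%C with ((g w - g z - l * (w - z)) / (w - z))%C
      by (field; auto).
    rewrite Cmod_div by auto.
    apply (Rmult_lt_reg_r (Cmod (w - z))); auto.
    unfold Rdiv. rewrite Rmult_assoc, Rinv_l by lra. nra.
Qed.

Lemma on_boundary_neq_interior a b c d (z : C) :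
  a < fst z < b -> c < snd z < d -> on_boundary (fun w => w <> z) a b c d.
Proof.
  destruct z as [zx zy]. simpl. intros Hx Hy.
  split; intros t Ht; split; intros E; injection E; intros; lra.
Qed.

Theorem cauchy_rect (g : C -> C) a b c d (z : C) : a <= b -> c <= d ->
  (forall x y, a <= x <= b -> c <= y <= d -> exists l, is_cderiv g (x, y) l) ->
  a < fst z < b -> c < snd z < d ->
  rect_integral (fun w => g w * / (w - z))%C a b c d
  = (g z * rect_integral (fun w => / (w - z))%C a b c d)%C.
Proof.
  intros Hab Hcd Hg Hzx Hzy.
  assert (Hcont := ccontinuous_on_rect_of_is_cderiv g a b c d Hg).
  destruct (Hg (fst z) (snd z)) as [l Hl]; try lra.
  rewrite <- surjective_pairing in Hl.
  assert (Hslope : rect_integral (slope g z l) a b c d = RtoC 0).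
  { apply (goursat_punctured _ a b c d z); auto.
    - intros x y Hx Hy. destruct (Ceq_dec (x, y) z) as [->|Hne].
      + apply slope_ccontinuous_center; auto.
      + destruct (Hg x y Hx Hy) as [lw Hlw].
        destruct (slope_is_cderiv g z l (x, y) lw Hne Hlw) as [l' Hl'].
        eapply is_cderiv_ccontinuous; eauto.
    - intros x y Hx Hy Hne. destruct (Hg x y Hx Hy) as [lw Hlw].
      apply (slope_is_cderiv g z l _ lw); auto. }
  assert (Hne := on_boundary_neq_interior a b c d z Hzx Hzy).
  assert (Hinv : on_boundary (ccontinuous (fun w => / (w - z))%C) a b c d)
    by (apply (on_boundary_impl _ _ _ _ _ _ (ccontinuous_inv_shift z) Hne)).
  assert (Hg' : on_boundary (ccontinuous g) a b c d)
    by (apply ccontinuous_on_rect_boundary; auto).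
  rewrite (rect_integral_ext a b c d Hab Hcd _ (fun w => g w * / (w - z) - g z * / (w - z))%C)
    in Hslope.
  - rewrite rect_integral_minus, rect_integral_scal in Hslope; auto.
    + apply Ceq_minus. exact Hslope.
    + apply on_boundary_ccontinuous_mult; auto.
    + apply (on_boundary_impl _ _ _ _ _ _ (fun w => metric_continuous_scal _ (g z) _ w) Hinv).
  - refine (on_boundary_impl _ _ _ _ _ _ _ Hne). intros w Hw.
    unfold slope. destruct (Ceq_dec w z); [contradiction | ring].
Qed.

(** * Derivatives of holomorphic functions are holomorphic *)

Lemma is_cderiv_cint_param (psi : C -> R -> C) (psi' : R -> C) z a b K r :
  a <= b -> 0 < r ->
  (forall h, Cmod h < r -> rcontinuous_on (psi (z + h)%C) a b) -> rcontinuous_on psi' a b ->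
  (forall h t, Cmod h < r -> a <= t <= b ->
     Cmod (psi (z + h)%C t - psi z t - h * psi' t)%C <= K * (Cmod h * Cmod h)) ->
  is_cderiv (fun w => cint (psi w) a b) z (cint psi' a b).
Proof.
  intros Hab Hr Hpsi Hpsi' Hb.
  assert (Hpsi0 : rcontinuous_on (psi z) a b).
  { specialize (Hpsi (RtoC 0)). rewrite Cmod_0, Cplus_0_r in Hpsi. auto. }
  apply (is_cderiv_quadratic _ _ _ (2 * (b - a) * K) r); auto.
  intros h Hh.
  rewrite <- cint_minus, Cmult_comm, <- cint_scal, <- cint_minus by
    (try apply rcontinuous_on_minus; try apply rcontinuous_on_scal; auto).
  replace (2 * (b - a) * K * (Cmod h * Cmod h)) with (2 * (b - a) * (K * (Cmod h * Cmod h)))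
    by ring.
  apply cint_bound; auto.
  apply rcontinuous_on_minus; [apply rcontinuous_on_minus | apply rcontinuous_on_scal]; auto.
Qed.

Lemma is_cderiv_rect_integral_param (k : C -> C -> C) (k' : C -> C) z a b c d K r :
  a <= b -> c <= d -> 0 < r ->
  (forall h, Cmod h < r -> on_boundary (ccontinuous (k (z + h)%C)) a b c d) ->
  on_boundary (ccontinuous k') a b c d ->
  on_boundary (fun w => forall h, Cmod h < r ->
    Cmod (k (z + h)%C w - k z w - h * k' w)%C <= K * (Cmod h * Cmod h)) a b c d ->
  is_cderiv (fun z' => rect_integral (k z') a b c d) z (rect_integral k' a b c d).
Proof.
  intros Hab Hcd Hr Hk Hk' [Hb1 Hb2].
  destruct (rcontinuous_on_sides a b c d Hab Hcd k' Hk') as (S1 & S2 & S3 & S4).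
  assert (Hs : forall h, Cmod h < r ->
    rcontinuous_on (fun t => k (z + h)%C (t, c)) a b /\
    rcontinuous_on (fun t => k (z + h)%C (t, d)) a b /\
    rcontinuous_on (fun t => k (z + h)%C (a, t)) c d /\
    rcontinuous_on (fun t => k (z + h)%C (b, t)) c d)
    by (intros h Hh; apply rcontinuous_on_sides; auto).
  unfold rect_integral.
  apply is_cderiv_minus; [apply is_cderiv_minus; [apply is_cderiv_plus|]|];
    try apply is_cderiv_scal;
    eapply (is_cderiv_cint_param (fun w t => k w _) _ z _ _ K r); auto;
    try (intros h Hh; apply (Hs h Hh));
    intros h t Hh Ht; first [ apply (Hb1 t Ht) | apply (Hb2 t Ht) ]; auto.
Qed.

Lemma neq_of_far (z h w : C) r : 0 < r -> 2 * r <= Cmod (w - z) -> Cmod h < r -> w <> (z + h)%C.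
Proof. intros Hr Hw Hh ->. replace (z + h - z)%C with h in Hw by ring. lra. Qed.

Section CauchyKernel.
Variables (g : C -> C) (a b c d : R) (z : C) (r M : R).
Hypotheses (Hab : a <= b) (Hcd : c <= d) (Hr : 0 < r)
  (Hg : on_boundary (ccontinuous g) a b c d)
  (HM : on_boundary (fun w => Cmod (g w) <= M) a b c d)
  (Hfar : on_boundary (fun w => 2 * r <= Cmod (w - z)) a b c d).

Lemma on_boundary_ccontinuous_inv_near h : Cmod h < r ->
  on_boundary (ccontinuous (fun w => / (w - (z + h)))%C) a b c d.
Proof.
  intros Hh. refine (on_boundary_impl _ _ _ _ _ _ _ Hfar). intros w Hw.
  apply ccontinuous_inv_shift. apply (neq_of_far z h w r); auto.
Qed.

Lemma on_boundary_ccontinuous_inv_center :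
  on_boundary (ccontinuous (fun w => / (w - z)))%C a b c d.
Proof.
  pose proof (on_boundary_ccontinuous_inv_near (RtoC 0) ltac:(rewrite Cmod_0; lra)) as H.
  rewrite Cplus_0_r in H. exact H.
Qed.

Lemma is_cderiv_cauchy_integral :
  is_cderiv (fun z' => rect_integral (fun w => g w * / (w - z'))%C a b c d) z
    (rect_integral (fun w => g w * (/ (w - z) * / (w - z)))%C a b c d).
Proof.
  pose proof on_boundary_ccontinuous_inv_center as Hinv0.
  apply (is_cderiv_rect_integral_param _ _ z a b c d (Rabs M * / (r * r * r)) r); auto.
  - intros h Hh.
    apply on_boundary_ccontinuous_mult, on_boundary_ccontinuous_inv_near; auto.
  - repeat apply on_boundary_ccontinuous_mult; auto.
  - refine (on_boundary_impl2 _ _ _ _ _ _ _ _ HM Hfar). intros w Hw1 Hw2 h Hh.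
    replace (g w * / (w - (z + h)) - g w * / (w - z) - h * (g w * (/ (w - z) * / (w - z))))%C
      with (g w * (/ ((w - z) - h) - / (w - z) - h * (/ (w - z) * / (w - z))))%C
      by (replace (w - (z + h))%C with ((w - z) - h)%C by ring; ring).
    rewrite Cmod_mult, Rmult_assoc.
    apply Rmult_le_compat; try apply Cmod_ge_0.
    + eapply Rle_trans; [exact Hw1 | apply Rle_abs].
    + apply Cinv_expansion_bound; auto.
Qed.

Lemma is_cderiv_cauchy_integral2 :
  is_cderiv (fun z' => rect_integral (fun w => g w * (/ (w - z') * / (w - z')))%C a b c d) z
    (rect_integral (fun w => g w * (RtoC 2 * (/ (w - z) * / (w - z) * / (w - z))))%C a b c d).
Proof.
  pose proof on_boundary_ccontinuous_inv_center as Hinv0.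
  apply (is_cderiv_rect_integral_param _ _ z a b c d (Rabs M * (4 * / (r * r * r * r))) r); auto.
  - intros h Hh. pose proof (on_boundary_ccontinuous_inv_near h Hh).
    repeat apply on_boundary_ccontinuous_mult; auto.
  - apply on_boundary_ccontinuous_mult; auto.
    apply (on_boundary_impl _ _ _ _ _ _ (fun w => metric_continuous_scal _ (RtoC 2) _ w)).
    repeat apply on_boundary_ccontinuous_mult; auto.
  - refine (on_boundary_impl2 _ _ _ _ _ _ _ _ HM Hfar). intros w Hw1 Hw2 h Hh.
    replace (g w * (/ (w - (z + h)) * / (w - (z + h))) - g w * (/ (w - z) * / (w - z))
             - h * (g w * (RtoC 2 * (/ (w - z) * / (w - z) * / (w - z)))))%C
      with (g w * (/ ((w - z) - h) * / ((w - z) - h) - / (w - z) * / (w - z)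
                   - h * (RtoC 2 * (/ (w - z) * / (w - z) * / (w - z)))))%C
      by (replace (w - (z + h))%C with ((w - z) - h)%C by ring; ring).
    rewrite Cmod_mult, Rmult_assoc.
    apply Rmult_le_compat; try apply Cmod_ge_0.
    + eapply Rle_trans; [exact Hw1 | apply Rle_abs].
    + apply Cinv_sq_expansion_bound; auto.
Qed.

End CauchyKernel.

Lemma cint_rotated_re_pos (u : C) f a b : a < b -> rcontinuous_on f a b ->
  (forall t, a <= t <= b -> 0 < fst (u * f t)%C) -> 0 < fst (u * cint f a b)%C.
Proof.
  intros Hab Hf Hpos. rewrite <- cint_scal by auto. apply RInt_gt_0; auto.
  - intros t Ht. apply Hpos. lra.
  - intros t Ht. apply (rcontinuous_re_im (fun s => u * f s)%C t).
    apply (rcontinuous_on_scal u f a b Hf). rewrite Rmin_left, Rmax_right; lra.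
Qed.

Lemma Cinv_re_im (p q : R) : p * p + q * q <> 0 ->
  (/ (p, q))%C = (p / (p * p + q * q), - q / (p * p + q * q)).
Proof. intros H. apply C_ext; simpl; field; contradict H; lra. Qed.

Section LocalCauchy.
Variables (g : C -> C) (x0 y0 s : R).
Hypothesis (Hs : 0 < s).
Let a := x0 - s.
Let b := x0 + s.
Let c := y0 - s.
Let d := y0 + s.
Let z0 : C := (x0, y0).
Hypothesis (Hg : forall x y, a <= x <= b -> c <= y <= d -> exists l, is_cderiv g (x, y) l).

Let Hab : a <= b. Proof. unfold a, b; lra. Qed.
Let Hcd : c <= d. Proof. unfold c, d; lra. Qed.

Lemma near_center_interior z : Cmod (z - z0) < s / 2 -> a < fst z < b /\ c < snd z < d.
Proof.
  intros H. pose proof (re_le_Cmod (z - z0)%C). pose proof (Rabs_snd_le_Cmod (z - z0)%C).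
  destruct z as [zx zy]. unfold z0, a, b, c, d in *. simpl in *.
  unfold Rabs in *; repeat destruct Rcase_abs; lra.
Qed.

Lemma near_center_far_from_boundary z : Cmod (z - z0) < s / 2 ->
  on_boundary (fun w => 2 * (s / 4) <= Cmod (w - z)) a b c d.
Proof.
  intros H. pose proof (re_le_Cmod (z - z0)%C). pose proof (Rabs_snd_le_Cmod (z - z0)%C).
  destruct z as [zx zy]. unfold z0 in *. simpl in *.
  split; intros t Ht; split;
    first [ eapply Rle_trans; [|apply Rabs_snd_le_Cmod]; simpl; unfold c, d in *;
            unfold Rabs in *; repeat destruct Rcase_abs; lra
          | eapply Rle_trans; [|apply re_le_Cmod]; simpl; unfold a, b in *;
            unfold Rabs in *; repeat destruct Rcase_abs; lra ].
Qed.

Definition winding (z : C) : C := rect_integral (fun w => / (w - z))%C a b c d.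

Lemma is_cderiv_winding z : Cmod (z - z0) < s / 2 -> is_cderiv winding z (RtoC 0).
Proof.
  intros Hz.
  assert (Hfar := near_center_far_from_boundary z Hz).
  assert (Hne : on_boundary (fun w => w <> z) a b c d).
  { refine (on_boundary_impl _ _ _ _ _ _ _ Hfar). intros w Hw E. subst w.
    replace (z - z)%C with (RtoC 0) in Hw by ring. rewrite Cmod_0 in Hw. lra. }
  assert (H := is_cderiv_cauchy_integral (fun _ => RtoC 1) a b c d z (s / 4) 1 Hab Hcd
                 ltac:(lra) ltac:(split; intros; split; apply metric_continuous_const)
                 ltac:(split; intros; split; rewrite Cmod_1; lra) Hfar).
  cbv beta in H.
  replace (fun z' => rect_integral (fun w => RtoC 1 * / (w - z'))%C a b c d) with winding in H
    by (apply functional_extensionality; intros z'; unfold winding;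
        f_equal; apply functional_extensionality; intros w; ring).
  replace (RtoC 0) with (rect_integral (fun w => RtoC 1 * (/ (w - z) * / (w - z)))%C a b c d);
    [exact H|].
  apply (rect_integral_primitive _ _ _ _ Hab Hcd (fun w => - / (w - z))%C).
  refine (on_boundary_impl _ _ _ _ _ _ _ Hne). intros w Hw. split.
  - replace (RtoC 1 * (/ (w - z) * / (w - z)))%C with (RtoC (-1) * - (/ (w - z) * / (w - z)))%C
      by ring.
    apply (is_cderiv_ext (fun v => RtoC (-1) * / (v - z))%C _ w _ 1); [lra | intros; ring |].
    apply is_cderiv_scal, is_cderiv_inv_shift; auto.
  - pose proof (ccontinuous_inv_shift z w Hw).
    apply metric_continuous_scal, metric_continuous_mult; auto.
Qed.

Lemma winding_constant z : Cmod (z - z0) < s / 2 -> winding z = winding z0.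
Proof.
  intros Hz. set (P := fun t : R => (z0 + RtoC t * (z - z0))%C).
  assert (HP : forall t, 0 <= t <= 1 -> Cmod (P t - z0) < s / 2).
  { intros t Ht. unfold P. replace (z0 + RtoC t * (z - z0) - z0)%C with (RtoC t * (z - z0))%C
      by ring.
    rewrite Cmod_mult, Cmod_R, Rabs_right by lra. pose proof (Cmod_ge_0 (z - z0)). nra. }
  assert (E := cint_derive (fun t => winding (P t)) (fun _ => (RtoC 0 * (z - z0))%C) 0 1).
  rewrite (cint_scal (RtoC 0) (fun _ => (z - z0)%C)) in E
    by (intros t _; apply metric_continuous_const).
  replace (P 1) with z in E by (unfold P; ring). replace (P 0) with z0 in E by (unfold P; ring).
  apply Ceq_minus. rewrite <- E; [ring| |].
  - intros t Ht. rewrite Rmin_left, Rmax_right in Ht by lra.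
    apply is_rderiv_comp; [apply is_cderiv_winding, HP; auto | apply is_rderiv_line].
  - intros t _. apply metric_continuous_const.
Qed.

(* The imaginary part of each side's contribution has a sign, e.g. on the bottom
   side [Im (/ ((t - x0) - i s)) = s / ((t - x0)^2 + s^2)]. *)
Lemma winding_center_im_pos : 0 < snd (winding z0).
Proof.
  assert (Hcont : on_boundary (ccontinuous (fun w => / (w - z0)))%C a b c d).
  { split; intros t Ht; split; apply ccontinuous_inv_shift; intros E;
      injection E; unfold a, b, c, d in *; lra. }
  destruct (rcontinuous_on_sides a b c d Hab Hcd _ Hcont) as (Sc & Sd & Sa & Sb).
  unfold winding, rect_integral.
  set (A := cint (fun t => / ((t, c) - z0))%C a b).
  set (B := cint (fun t => / ((b, t) - z0))%C c d).
  set (D := cint (fun t => / ((t, d) - z0))%C a b).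
  set (E := cint (fun t => / ((a, t) - z0))%C c d).
  replace (snd (A + Ci * B - D - Ci * E)%C)
    with (fst (- Ci * A)%C + fst B + fst (Ci * D)%C + fst (- (1) * E)%C) by (simpl; ring).
  assert (Hsq : forall p, 0 < p * p + s * s) by (intros; nra).
  assert (Hpos : forall p, 0 < s / (p * p + s * s)) by (intros; apply Rdiv_lt_0_compat; auto).
  apply Rplus_lt_0_compat; [apply Rplus_lt_0_compat; [apply Rplus_lt_0_compat|]|];
    [ apply (cint_rotated_re_pos (- Ci)) | rewrite <- (Cmult_1_l B); apply cint_rotated_re_pos
    | apply cint_rotated_re_pos | apply cint_rotated_re_pos ]; unfold a, b, c, d in *;
    try lra; auto; intros t Ht; unfold z0.
  - replace ((t, (y0 - s)%R) - (x0, y0))%C with ((t - x0, - s) : C) by (apply C_ext; simpl; ring).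
    rewrite Cinv_re_im by (specialize (Hsq (t - x0)); lra). simpl.
    specialize (Hpos (t - x0)). replace (- s * - s) with (s * s) by ring. lra.
  - replace (((x0 + s)%R, t) - (x0, y0))%C with ((s, t - y0) : C) by (apply C_ext; simpl; ring).
    rewrite Cinv_re_im by (specialize (Hsq (t - y0)); lra). simpl.
    specialize (Hpos (t - y0)). rewrite Rplus_comm. lra.
  - replace ((t, (y0 + s)%R) - (x0, y0))%C with ((t - x0, s) : C) by (apply C_ext; simpl; ring).
    rewrite Cinv_re_im by (specialize (Hsq (t - x0)); lra). simpl.
    specialize (Hpos (t - x0)). unfold Rdiv in *. lra.
  - replace (((x0 - s)%R, t) - (x0, y0))%C with ((- s, t - y0) : C) by (apply C_ext; simpl; ring).
    rewrite Cinv_re_im by (specialize (Hsq (t - y0)); lra). simpl.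
    specialize (Hpos (t - y0)). replace (- s * - s) with (s * s) by ring.
    rewrite Rplus_comm. unfold Rdiv in *. lra.
Qed.

Lemma cauchy_representation z : Cmod (z - z0) < s / 2 ->
  g z = (/ winding z0 * rect_integral (fun w => g w * / (w - z)) a b c d)%C.
Proof.
  intros Hz. destruct (near_center_interior z Hz) as [Ix Iy].
  rewrite (cauchy_rect g a b c d z Hab Hcd Hg Ix Iy).
  fold (winding z). rewrite (winding_constant z Hz).
  assert (winding z0 <> RtoC 0).
  { intros E. pose proof winding_center_im_pos. rewrite E in H. simpl in H. lra. }
  field. auto.
Qed.

Theorem cderiv_locally_differentiable : exists g1 : C -> C,
  (forall z, Cmod (z - z0) < s / 2 -> is_cderiv g z (g1 z)) /\
  (forall z, Cmod (z - z0) < s / 2 -> exists l, is_cderiv g1 z l).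
Proof.
  assert (Bg : on_boundary (ccontinuous g) a b c d)
    by (apply ccontinuous_on_rect_boundary, ccontinuous_on_rect_of_is_cderiv; auto).
  destruct (on_boundary_bounded g a b c d Hab Hcd Bg) as [M HM].
  exists (fun z => / winding z0 * rect_integral (fun w => g w * (/ (w - z) * / (w - z))) a b c d)%C.
  split; intros z Hz.
  - apply (is_cderiv_ext
             (fun z' => / winding z0 * rect_integral (fun w => g w * / (w - z')) a b c d)%C
             g z _ (s / 2 - Cmod (z - z0))); [lra| |].
    + intros w Hw. symmetry. apply cauchy_representation.
      replace (w - z0)%C with ((w - z) + (z - z0))%C by ring.
      eapply Rle_lt_trans; [apply Cmod_triangle | lra].
    + apply is_cderiv_scal, (is_cderiv_cauchy_integral g a b c d z (s / 4) M); auto; try lra.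
      apply near_center_far_from_boundary; auto.
  - eexists.
    apply is_cderiv_scal, (is_cderiv_cauchy_integral2 g a b c d z (s / 4) M); auto; try lra.
    apply near_center_far_from_boundary; auto.
Qed.

End LocalCauchy.

Definition cholomorphic_on (V : C -> Prop) (g : C -> C) : Prop :=
  forall z, V z -> exists l, is_cderiv g z l.

Definition Cmod_open (V : C -> Prop) : Prop :=
  forall z, V z -> exists r, 0 < r /\ forall w, Cmod (w - z) < r -> V w.

(* An arbitrary value where [g] is not differentiable. *)
Definition cderiv (g : C -> C) (z : C) : C :=
  epsilon (inhabits (RtoC 0)) (fun l => is_cderiv g z l).

Lemma is_cderiv_cderiv V g z : cholomorphic_on V g -> V z -> is_cderiv g z (cderiv g z).
Proof. intros H Hz. unfold cderiv. apply epsilon_spec, H, Hz. Qed.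

Theorem cholomorphic_on_cderiv V g : Cmod_open V -> cholomorphic_on V g ->
  cholomorphic_on V (cderiv g).
Proof.
  intros HV Hg [x0 y0] Hz0. destruct (HV _ Hz0) as [r [Hr Hball]].
  set (s := r / 3).
  assert (Hsquare : forall x y, x0 - s <= x <= x0 + s -> y0 - s <= y <= y0 + s ->
                      exists l, is_cderiv g (x, y) l).
  { intros x y Hx Hy. apply Hg, Hball. eapply Rle_lt_trans; [apply Cmod_le_Rabs_fst_snd|].
    simpl. unfold s in *. unfold Rabs; repeat destruct Rcase_abs; lra. }
  destruct (cderiv_locally_differentiable g x0 y0 s ltac:(unfold s; lra) Hsquare)
    as [g1 [G1 G2]].
  assert (Hc : Cmod ((x0, y0) - (x0, y0)) < s / 2)
    by (replace ((x0, y0) - (x0, y0))%C with (RtoC 0) by ring; rewrite Cmod_0; unfold s; lra).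
  destruct (G2 _ Hc) as [l Hl]. exists l.
  apply (is_cderiv_ext g1 (cderiv g) (x0, y0) l (s / 2)); [unfold s; lra| |auto].
  intros w Hw. apply (is_cderiv_unique g w); auto.
  apply (is_cderiv_cderiv V); auto. apply Hball. unfold s in *. lra.
Qed.

Lemma open_Cmod_open (U : C -> Prop) : open U -> Cmod_open U.
Proof.
  intros HU z Hz. destruct (HU z Hz) as [eps Heps].
  exists eps. split; [apply cond_pos|]. intros w Hw. apply Heps, C_NormedModule_mixin_compat1, Hw.
Qed.

Lemma is_derive_is_cderiv (f : C -> C) z l :
  is_derive (K := C_AbsRing) (V := C_NormedModule) f z l -> is_cderiv f z l.
Proof.
  intros [_ H] eps Heps.
  destruct (H z (fun P HP => HP) (mkposreal eps Heps)) as [del Hdel].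
  exists del. split; [apply cond_pos|]. intros h Hh.
  assert (B : ball z del (z + h)%C).
  { unfold ball; simpl. unfold AbsRing_ball.
    replace (@minus (AbsRing.AbelianGroup C_AbsRing) (Cplus z h) z) with h; auto.
    apply C_ext; simpl; ring. }
  specialize (Hdel _ B). simpl in Hdel.
  replace (@minus (AbsRing_NormedModule C_AbsRing) (Cplus z h) z) with h in Hdel
    by (apply C_ext; simpl; ring).
  replace (f (z + h)%C - f z - l * h)%C with (minus (minus (f (z + h)%C) (f z)) (scal h l)).
  - exact Hdel.
  - unfold minus, plus, opp, scal; simpl. unfold mult; simpl. apply C_ext; simpl; ring.
Qed.

(** * Partial derivatives of axially symmetric expressions *)

(* [coord] and [setc] address every index [k >= 3] as the last coordinate. *)
Definition coord_index (k : nat) : nat := match k with 0 => 0 | 1 => 1 | 2 => 2 | _ => 3 end.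

Lemma coord_setc x k t j :
  coord (setc x k t) j = if Nat.eqb (coord_index j) (coord_index k) then t else coord x j.
Proof.
  destruct x as [[[a b] c] d]. destruct k as [|[|[|k]]]; destruct j as [|[|[|j]]]; reflexivity.
Qed.

Lemma setc_coord x k : setc x k (coord x k) = x.
Proof. destruct x as [[[a b] c] d]. destruct k as [|[|[|k]]]; reflexivity. Qed.

Definition vnorm2 (x : R4) : R := coord x 1 ^ 2 + coord x 2 ^ 2 + coord x 3 ^ 2.

Lemma vnorm2_nonneg x : 0 <= vnorm2 x.
Proof. unfold vnorm2. nra. Qed.

Lemma vnorm2_setc x k t : coord_index k <> 0%nat ->
  vnorm2 (setc x k t) = vnorm2 x - coord x k ^ 2 + t ^ 2.
Proof.
  intros Hk. destruct x as [[[a b] c] d]. unfold vnorm2.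
  destruct k as [|[|[|k]]]; simpl in *; try congruence; ring.
Qed.

Lemma vnorm_setc0 x t : vnorm (setc x 0 t) = vnorm x.
Proof. destruct x as [[[a b] c] d]. reflexivity. Qed.

Lemma vnorm_pos x : vnorm x <> 0 -> 0 < vnorm x.
Proof.
  intros H. change (vnorm x) with (sqrt (vnorm2 x)) in *.
  destruct (sqrt_pos (vnorm2 x)) as [Hp|E]; [auto | congruence].
Qed.

Lemma vnorm_sqr x : vnorm x * vnorm x = vnorm2 x.
Proof. apply sqrt_sqrt, vnorm2_nonneg. Qed.

Definition is_scalar_index (k : nat) : bool := Nat.eqb (coord_index k) 0.

Lemma derivable_pt_lim_coord x k j :
  derivable_pt_lim (fun t => coord (setc x k t) j) (coord x k)
    (if Nat.eqb (coord_index j) (coord_index k) then 1 else 0).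
Proof.
  destruct (Nat.eqb (coord_index j) (coord_index k)) eqn:E.
  - apply (derivable_pt_lim_ext (fun t => t)); [intros t; rewrite coord_setc, E; auto|].
    apply derivable_pt_lim_id.
  - apply (derivable_pt_lim_ext (fun _ => coord x j)); [intros t; rewrite coord_setc, E; auto|].
    apply derivable_pt_lim_const.
Qed.

Lemma derivable_pt_lim_vnorm x k : vnorm x <> 0 ->
  derivable_pt_lim (fun t => vnorm (setc x k t)) (coord x k)
    (if is_scalar_index k then 0 else coord x k * / vnorm x).
Proof.
  intros Hx. pose proof (vnorm_pos x Hx) as Hp. unfold is_scalar_index.
  destruct (Nat.eqb_spec (coord_index k) 0) as [E|E].
  - replace k with 0%nat by (destruct k as [|[|[|k]]]; simpl in E; congruence).
    apply (derivable_pt_lim_ext (fun _ => vnorm x)); [intros t; symmetry; apply vnorm_setc0|].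
    apply derivable_pt_lim_const.
  - apply is_derive_Reals.
    apply (is_derive_ext (fun t => sqrt (vnorm2 x - coord x k ^ 2 + t ^ 2)));
      [intros t; unfold vnorm; fold (vnorm2 (setc x k t)); rewrite vnorm2_setc; auto|].
    replace (coord x k * / vnorm x)
      with (2 * coord x k ^ 1 * 1 / (2 * sqrt (vnorm2 x - coord x k ^ 2 + coord x k ^ 2))).
    + apply (is_derive_sqrt (fun t => vnorm2 x - coord x k ^ 2 + t ^ 2)).
      * auto_derive; auto. ring.
      * replace (vnorm2 x - coord x k ^ 2 + coord x k ^ 2) with (vnorm2 x) by ring.
        rewrite <- vnorm_sqr. nra.
    + replace (vnorm2 x - coord x k ^ 2 + coord x k ^ 2) with (vnorm2 x) by ring.
      change (sqrt (vnorm2 x)) with (vnorm x). field. lra.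
Qed.

Definition cpoint (x : R4) : C := (coord x 0, vnorm x).

Inductive pexpr : Type :=
| PConst (z : Z)
| PCoord (k : nat)
| PNorm
| PInvNorm
| PRe (n : nat)
| PIm (n : nat)
| PAdd (e1 e2 : pexpr)
| PMul (e1 e2 : pexpr).

Fixpoint peval (F : nat -> C -> C) (e : pexpr) (x : R4) : R :=
  match e with
  | PConst z => IZR z
  | PCoord k => coord x k
  | PNorm => vnorm x
  | PInvNorm => / vnorm x
  | PRe n => fst (F n (cpoint x))
  | PIm n => snd (F n (cpoint x))
  | PAdd e1 e2 => peval F e1 x + peval F e2 x
  | PMul e1 e2 => peval F e1 x * peval F e2 x
  end.

Definition padd (e1 e2 : pexpr) : pexpr :=
  match e1, e2 with
  | PConst Z0, _ => e2
  | _, PConst Z0 => e1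
  | PConst a, PConst b => PConst (a + b)
  | _, _ => PAdd e1 e2
  end.

Definition pmul (e1 e2 : pexpr) : pexpr :=
  match e1, e2 with
  | PConst Z0, _ => PConst 0
  | _, PConst Z0 => PConst 0
  | PConst (Zpos xH), _ => e2
  | _, PConst (Zpos xH) => e1
  | PConst a, PConst b => PConst (a * b)
  | _, _ => PMul e1 e2
  end.

Lemma peval_padd F e1 e2 x : peval F (padd e1 e2) x = peval F e1 x + peval F e2 x.
Proof.
  destruct e1 as [a| | | | | | |]; destruct e2 as [b| | | | | | |];
    try destruct a; try destruct b; unfold padd; cbn [peval]; try ring;
    rewrite plus_IZR; ring.
Qed.

Lemma peval_pmul F e1 e2 x : peval F (pmul e1 e2) x = peval F e1 x * peval F e2 x.
Proof.
  destruct e1 as [a| | | | | | |]; destruct e2 as [b| | | | | | |];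
    try (destruct a as [|p|p]; try destruct p); try (destruct b as [|q|q]; try destruct q);
    unfold pmul; cbn [peval]; try ring; rewrite mult_IZR; ring.
Qed.

(* In a vector direction [x_k], [d |x| = x_k / |x|]; by the Cauchy-Riemann
   equations [d_eta Re F n = - Im F (n+1)] and [d_eta Im F n = Re F (n+1)]. *)
Fixpoint pderiv (k : nat) (e : pexpr) : pexpr :=
  match e with
  | PConst _ => PConst 0
  | PCoord j => if Nat.eqb (coord_index j) (coord_index k) then PConst 1 else PConst 0
  | PNorm => if is_scalar_index k then PConst 0 else pmul (PCoord k) PInvNorm
  | PInvNorm => if is_scalar_index k then PConst 0
                else pmul (PConst (-1)) (pmul (PCoord k) (pmul PInvNorm (pmul PInvNorm PInvNorm)))
  | PRe n => if is_scalar_index k then PRe (S n)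
             else pmul (PConst (-1)) (pmul (PIm (S n)) (pmul (PCoord k) PInvNorm))
  | PIm n => if is_scalar_index k then PIm (S n) else pmul (PRe (S n)) (pmul (PCoord k) PInvNorm)
  | PAdd e1 e2 => padd (pderiv k e1) (pderiv k e2)
  | PMul e1 e2 => padd (pmul (pderiv k e1) e2) (pmul e1 (pderiv k e2))
  end.

Definition axial_domain (U : C -> Prop) (x : R4) : Prop := vnorm x <> 0 /\ U (cpoint x).

Lemma is_rderiv_cpoint x k : vnorm x <> 0 ->
  is_rderiv (fun t => cpoint (setc x k t)) (coord x k)
    (if is_scalar_index k then RtoC 1 else (0, coord x k * / vnorm x)).
Proof.
  intros Hx. apply is_rderiv_re_im. unfold cpoint. split.
  - pose proof (derivable_pt_lim_coord x k 0) as H. unfold is_scalar_index.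
    destruct (coord_index k); auto.
  - pose proof (derivable_pt_lim_vnorm x k Hx) as H.
    destruct (is_scalar_index k); auto.
Qed.

Lemma derivable_pt_lim_value (f : R -> R) t l l' :
  derivable_pt_lim f t l -> l = l' -> derivable_pt_lim f t l'.
Proof. intros H <-. exact H. Qed.

Section PartialDerivatives.
Variables (F : nat -> C -> C) (U : C -> Prop).
Hypothesis HF : forall n w, U w -> is_cderiv (F n) w (F (S n) w).

Lemma is_rderiv_F_cpoint n x k : axial_domain U x ->
  is_rderiv (fun t => F n (cpoint (setc x k t))) (coord x k)
    (F (S n) (cpoint x) * if is_scalar_index k then RtoC 1 else (0, coord x k * / vnorm x)%R)%C.
Proof.
  intros [Hx HU]. apply (is_rderiv_comp (F n)); [|apply is_rderiv_cpoint; auto].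
  rewrite setc_coord. apply HF. auto.
Qed.

Lemma pderiv_correct e x k : axial_domain U x ->
  derivable_pt_lim (fun t => peval F e (setc x k t)) (coord x k) (peval F (pderiv k e) x).
Proof.
  intros Hx. pose proof (proj1 Hx) as Hv. pose proof (vnorm_pos x Hv) as Hpos.
  induction e; cbn [peval pderiv].
  - apply derivable_pt_lim_const.
  - pose proof (derivable_pt_lim_coord x k k0) as H.
    destruct (Nat.eqb (coord_index k0) (coord_index k)); auto.
  - pose proof (derivable_pt_lim_vnorm x k Hv) as H.
    destruct (is_scalar_index k); rewrite ?peval_pmul; auto.
  - pose proof (derivable_pt_lim_vnorm x k Hv) as H.
    apply is_derive_Reals in H.
    pose proof (is_derive_inv (fun t => vnorm (setc x k t)) (coord x k) _ H) as Hi.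
    cbv beta in Hi. rewrite setc_coord in Hi. specialize (Hi Hv). apply is_derive_Reals.
    destruct (is_scalar_index k); rewrite ?peval_pmul; cbn [peval].
    + replace (IZR 0) with (- 0 / vnorm x ^ 2) by (simpl; field; lra). auto.
    + replace (-1 * (coord x k * (/ vnorm x * (/ vnorm x * / vnorm x))))
        with (- (coord x k * / vnorm x) / vnorm x ^ 2) by (field; lra). auto.
  - destruct (proj1 (is_rderiv_re_im _ _ _) (is_rderiv_F_cpoint n x k Hx)) as [H _].
    eapply derivable_pt_lim_value; [exact H|].
    destruct (is_scalar_index k); rewrite ?peval_pmul; simpl; ring.
  - destruct (proj1 (is_rderiv_re_im _ _ _) (is_rderiv_F_cpoint n x k Hx)) as [_ H].
    eapply derivable_pt_lim_value; [exact H|].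
    destruct (is_scalar_index k); rewrite ?peval_pmul; simpl; ring.
  - rewrite peval_padd. apply derivable_pt_lim_plus; auto.
  - rewrite peval_padd, !peval_pmul.
    pose proof (derivable_pt_lim_mult _ _ _ _ _ IHe1 IHe2) as H. cbv beta in H.
    rewrite !setc_coord in H. exact H.
Qed.

End PartialDerivatives.

Lemma continuous_coord j (x : R4) : continuous (fun y : R4 => coord y j) x.
Proof.
  apply filterlim_locally. intros eps. exists eps.
  destruct x as [[[a b] c] d]. intros [[[a' b'] c'] d'] [[[H1 H2] H3] H4].
  destruct j as [|[|[|j]]]; assumption.
Qed.

Lemma continuous_vnorm (x : R4) : continuous vnorm x.
Proof.
  change (continuous (fun y => sqrt (vnorm2 y)) x).
  apply (continuous_comp vnorm2 sqrt); [|apply continuous_sqrt].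
  assert (Hsq : forall j, continuous (fun y : R4 => coord y j ^ 2) x).
  { intros j. apply (continuous_ext (fun y => coord y j * coord y j)); [intros y; apply Rsqr_pow2|].
    apply (continuous_mult (K := R_AbsRing)); apply continuous_coord. }
  apply (continuous_plus (V := R_NormedModule)); [apply (continuous_plus (V := R_NormedModule))|];
    apply Hsq.
Qed.

Lemma locally_Rabs_lt (f : R4 -> R) x eps : continuous f x -> 0 < eps ->
  locally x (fun y => Rabs (f y - f x) < eps).
Proof. intros Hf Heps. apply (proj1 (filterlim_locally f (f x)) Hf (mkposreal eps Heps)). Qed.

Lemma locally_cpoint_near x del : 0 < del -> locally x (fun y => Cmod (cpoint y - cpoint x) < del).
Proof.
  intros Hdel.
  apply (filter_imp (fun y => Rabs (coord y 0 - coord x 0) < del / 2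
                              /\ Rabs (vnorm y - vnorm x) < del / 2)).
  - intros y [H1 H2]. eapply Rle_lt_trans; [apply Cmod_le_Rabs_fst_snd|].
    unfold cpoint. simpl. unfold Rminus in *. lra.
  - apply filter_and; apply locally_Rabs_lt;
      [apply continuous_coord | lra | apply continuous_vnorm | lra].
Qed.

Lemma continuous_re_im_cpoint (G : C -> C) x : ccontinuous G (cpoint x) ->
  continuous (fun y => fst (G (cpoint y))) x /\ continuous (fun y => snd (G (cpoint y))) x.
Proof.
  intros HG. split; apply filterlim_locally; intros eps;
    destruct (HG eps (cond_pos eps)) as [del [Hdel H]];
    generalize (locally_cpoint_near x del Hdel); apply filter_imp; intros y Hy;
    specialize (H _ Hy); eapply Rle_lt_trans; try exact H.
  - apply (re_le_Cmod (G (cpoint y) - G (cpoint x))%C).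
  - apply (Rabs_snd_le_Cmod (G (cpoint y) - G (cpoint x))%C).
Qed.

Lemma locally_axial_domain U x : Cmod_open U -> axial_domain U x -> locally x (axial_domain U).
Proof.
  intros HU [Hx Hu]. destruct (HU _ Hu) as [r [Hr Hball]].
  pose proof (vnorm_pos x Hx).
  apply (filter_imp (fun y => Rabs (vnorm y - vnorm x) < vnorm x
                              /\ Cmod (cpoint y - cpoint x) < r)).
  - intros y [H1 H2]. split; [|apply Hball; auto].
    intros E. rewrite E in H1. unfold Rabs in H1. destruct Rcase_abs; lra.
  - apply filter_and; [apply locally_Rabs_lt; [apply continuous_vnorm | lra]|].
    apply locally_cpoint_near; auto.
Qed.

Lemma locally_setc (P : R4 -> Prop) x k :
  locally x P -> locally (coord x k) (fun t => P (setc x k t)).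
Proof.
  intros [eps H]. exists eps. intros t Ht. apply H.
  destruct x as [[[a b] c] d]. pose proof (ball_center a eps). pose proof (ball_center b eps).
  pose proof (ball_center c eps). pose proof (ball_center d eps).
  destruct k as [|[|[|k]]]; repeat split; auto.
Qed.

Section Smoothness.
Variables (F : nat -> C -> C) (U : C -> Prop).
Hypotheses (HF : forall n w, U w -> is_cderiv (F n) w (F (S n) w)) (HU : Cmod_open U).

Lemma peval_continuous e x : axial_domain U x -> continuous (peval F e) x.
Proof.
  intros [Hx Hu]. induction e; cbn [peval].
  - apply continuous_const.
  - apply continuous_coord.
  - apply continuous_vnorm.
  - apply (continuous_comp vnorm Rinv); [apply continuous_vnorm | apply continuous_Rinv; auto].
  - apply continuous_re_im_cpoint. eapply is_cderiv_ccontinuous, HF, Hu.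
  - apply continuous_re_im_cpoint. eapply is_cderiv_ccontinuous, HF, Hu.
  - apply (continuous_plus (V := R_NormedModule)); auto.
  - apply (continuous_mult (K := R_AbsRing)); auto.
Qed.

Lemma pd_peval (g : R4 -> R) e : (forall y, axial_domain U y -> g y = peval F e y) ->
  forall k y, axial_domain U y -> pd k g y = peval F (pderiv k e) y.
Proof.
  intros Hg k y Hy. unfold pd.
  rewrite (Derive_ext_loc _ (fun t => peval F e (setc y k t))).
  - apply is_derive_unique, is_derive_Reals, (pderiv_correct F U HF); auto.
  - apply (filter_imp (fun t => axial_domain U (setc y k t))); [intros t; apply Hg|].
    apply locally_setc, locally_axial_domain; auto.
Qed.

Lemma iter_pd_peval (g : R4 -> R) e : (forall y, axial_domain U y -> g y = peval F e y) ->
  forall ks y, axial_domain U y -> iter_pd ks g y = peval F (fold_right pderiv e ks) y.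
Proof.
  intros Hg ks. induction ks as [|k ks IH]; intros y Hy; simpl; auto.
  apply (pd_peval (iter_pd ks g) (fold_right pderiv e ks)); auto.
Qed.

Lemma smooth_on_peval (g : R4 -> R) e : (forall y, axial_domain U y -> g y = peval F e y) ->
  smooth_on (axial_domain U) g.
Proof.
  intros Hg ks x Hx. split.
  - apply (continuous_ext_loc _ (peval F (fold_right pderiv e ks)));
      [|apply peval_continuous; auto].
    apply (filter_imp (axial_domain U)); [|apply locally_axial_domain; auto].
    intros y Hy. symmetry. apply iter_pd_peval; auto.
  - intros k _. apply (ex_derive_ext_loc (fun t => peval F (fold_right pderiv e ks) (setc x k t))).
    + apply (filter_imp (fun t => axial_domain U (setc x k t)));
        [|apply locally_setc, locally_axial_domain; auto].
      intros t Ht. symmetry. apply iter_pd_peval; auto.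
    + eexists. apply is_derive_Reals, (pderiv_correct F U HF); auto.
Qed.

End Smoothness.

(** * The axial lift of a holomorphic function *)

Definition axial_lift (f : C -> C) (x : R4) : Cl :=
  para (fst (f (cpoint x)))
       (coord x 1 / vnorm x * snd (f (cpoint x)))
       (coord x 2 / vnorm x * snd (f (cpoint x)))
       (coord x 3 / vnorm x * snd (f (cpoint x))).

Definition axial_lift_expr (c1 c2 c3 : bool) : pexpr :=
  match c1, c2, c3 with
  | false, false, false => PRe 0
  | true, false, false => PMul (PMul (PCoord 1) PInvNorm) (PIm 0)
  | false, true, false => PMul (PMul (PCoord 2) PInvNorm) (PIm 0)
  | false, false, true => PMul (PMul (PCoord 3) PInvNorm) (PIm 0)
  | _, _, _ => PConst 0
  end.

Definition iter_cderiv (f : C -> C) (n : nat) : C -> C := Nat.iter n cderiv f.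

Lemma axial_lift_peval f x c1 c2 c3 :
  axial_lift f x c1 c2 c3 = peval (iter_cderiv f) (axial_lift_expr c1 c2 c3) x.
Proof.
  destruct c1, c2, c3; unfold axial_lift, para, axial_lift_expr; cbn [peval]; simpl;
    try reflexivity; unfold Rdiv; ring.
Qed.

Definition laplacian_expr (e : pexpr) : pexpr :=
  padd (pderiv 0 (pderiv 0 e))
    (padd (pderiv 1 (pderiv 1 e)) (padd (pderiv 2 (pderiv 2 e)) (pderiv 3 (pderiv 3 e)))).

Lemma cl_mul_gen0 (v : Cl) c1 c2 c3 : cl_mul (gen 0) v c1 c2 c3 = v c1 c2 c3.
Proof. destruct c1, c2, c3; unfold cl_mul, gen, blade, sumb, blade_sign; simpl; ring. Qed.

Lemma cl_mul_gen1 (v : Cl) c1 c2 c3 :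
  cl_mul (gen 1) v c1 c2 c3 = blade_sign true false false (negb c1) c2 c3 * v (negb c1) c2 c3.
Proof. destruct c1, c2, c3; unfold cl_mul, gen, blade, sumb, blade_sign; simpl; ring. Qed.

Lemma cl_mul_gen2 (v : Cl) c1 c2 c3 :
  cl_mul (gen 2) v c1 c2 c3 = blade_sign false true false c1 (negb c2) c3 * v c1 (negb c2) c3.
Proof. destruct c1, c2, c3; unfold cl_mul, gen, blade, sumb, blade_sign; simpl; ring. Qed.

Lemma cl_mul_gen3 (v : Cl) c1 c2 c3 :
  cl_mul (gen 3) v c1 c2 c3 = blade_sign false false true c1 c2 (negb c3) * v c1 c2 (negb c3).
Proof. destruct c1, c2, c3; unfold cl_mul, gen, blade, sumb, blade_sign; simpl; ring. Qed.

Ltac normalize_pexpr :=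
  repeat match goal with
  | |- context [peval ?F (pderiv ?k (laplacian_expr (axial_lift_expr ?a ?b ?c))) ?x] =>
      let e := constr:(pderiv k (laplacian_expr (axial_lift_expr a b c))) in
      let v := eval vm_compute in e in
      replace e with v by (vm_compute; reflexivity)
  end.

Lemma dirac_laplacian_axial_lift_expr (F : nat -> C -> C) x c1 c2 c3 : vnorm x <> 0 ->
  peval F (pderiv 0 (laplacian_expr (axial_lift_expr c1 c2 c3))) x
  + (blade_sign true false false (negb c1) c2 c3
     * peval F (pderiv 1 (laplacian_expr (axial_lift_expr (negb c1) c2 c3))) x
  + (blade_sign false true false c1 (negb c2) c3
     * peval F (pderiv 2 (laplacian_expr (axial_lift_expr c1 (negb c2) c3))) x
  + blade_sign false false true c1 c2 (negb c3)
     * peval F (pderiv 3 (laplacian_expr (axial_lift_expr c1 c2 (negb c3)))) x)) = 0.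
Proof.
  intros Hv.
  assert (Hx1 : coord x 1 ^ 2 = vnorm x ^ 2 - coord x 2 ^ 2 - coord x 3 ^ 2).
  { pose proof (vnorm_sqr x) as Hq. unfold vnorm2 in Hq. nra. }
  destruct c1, c2, c3; unfold blade_sign; cbn [negb nb Nat.mul Nat.add pow];
    normalize_pexpr; cbn [peval]; try (ring; fail).
  (* Only the scalar component needs [x_1^2 + x_2^2 + x_3^2 = |x|^2]. *)
  ring_simplify. replace (coord x 1 ^ 4) with ((coord x 1 ^ 2) ^ 2) by ring.
  rewrite Hx1. field. auto.
Qed.

Section AxialLift.
Variables (U : C -> Prop) (f : C -> C).
Hypotheses (HU : Cmod_open U) (Hf : cholomorphic_on U f).

Lemma is_cderiv_iter_cderiv n w : U w -> is_cderiv (iter_cderiv f n) w (iter_cderiv f (S n) w).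
Proof.
  intros Hw. apply (is_cderiv_cderiv U); auto.
  induction n as [|n IH]; [exact Hf | apply cholomorphic_on_cderiv; auto].
Qed.

Lemma pd_axial_lift_peval (G : R4 -> Cl) (E : bool -> bool -> bool -> pexpr) k x :
  (forall y c1 c2 c3, axial_domain U y -> G y c1 c2 c3 = peval (iter_cderiv f) (E c1 c2 c3) y) ->
  axial_domain U x -> pdC k G x = fun c1 c2 c3 => peval (iter_cderiv f) (pderiv k (E c1 c2 c3)) x.
Proof.
  intros HG Hx. extensionality c1. extensionality c2. extensionality c3. unfold pdC.
  apply (pd_peval _ U is_cderiv_iter_cderiv HU); auto.
Qed.

Lemma Lap_axial_lift_peval y c1 c2 c3 : axial_domain U y ->
  Lap (axial_lift f) y c1 c2 c3
  = peval (iter_cderiv f) (laplacian_expr (axial_lift_expr c1 c2 c3)) y.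
Proof.
  intros Hy. unfold Lap, cl_add, laplacian_expr. rewrite !peval_padd.
  assert (Hdd : forall k, pdC k (pdC k (axial_lift f)) y
                  = fun c1 c2 c3 =>
                      peval (iter_cderiv f) (pderiv k (pderiv k (axial_lift_expr c1 c2 c3))) y).
  { intros k. apply pd_axial_lift_peval; auto. intros z a1 a2 a3 Hz.
    rewrite (pd_axial_lift_peval _ axial_lift_expr k z); auto.
    intros; apply axial_lift_peval. }
  rewrite !Hdd. reflexivity.
Qed.

Theorem axial_lift_holomorphic_cliffordian :
  holomorphic_cliffordian (axial_domain U) (axial_lift f).
Proof.
  split.
  - intros c1 c2 c3.
    apply (smooth_on_peval (iter_cderiv f) U is_cderiv_iter_cderiv HU _ (axial_lift_expr c1 c2 c3)).
    intros y _. apply axial_lift_peval.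
  - intros x Hx.
    assert (HD : forall k, pdC k (Lap (axial_lift f)) x
               = fun c1 c2 c3 =>
                   peval (iter_cderiv f) (pderiv k (laplacian_expr (axial_lift_expr c1 c2 c3))) x)
      by (intros k; apply pd_axial_lift_peval; auto; intros; apply Lap_axial_lift_peval; auto).
    unfold Dop. rewrite !HD.
    extensionality c1. extensionality c2. extensionality c3.
    unfold cl_zero, cl_add. rewrite cl_mul_gen0, cl_mul_gen1, cl_mul_gen2, cl_mul_gen3.
    apply dirac_laplacian_axial_lift_expr, Hx.
Qed.

End AxialLift.

Theorem lemma2 (U : C -> Prop) (f : C -> C) :
  open U -> holomorphic_on U f ->
  let u := fun xi eta : R => fst (f (xi, eta)) in
  let v := fun xi eta : R => snd (f (xi, eta)) in
  holomorphic_cliffordian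
    (fun x => vnorm x <> 0 /\ U (coord x 0, vnorm x))
    (fun x => para (u (coord x 0) (vnorm x))
                   (coord x 1 / vnorm x * v (coord x 0) (vnorm x))
                   (coord x 2 / vnorm x * v (coord x 0) (vnorm x))
                   (coord x 3 / vnorm x * v (coord x 0) (vnorm x))).
Proof.
  intros HU Hf u v.
  apply (axial_lift_holomorphic_cliffordian U f (open_Cmod_open U HU)).
  intros z Hz. destruct (Hf z Hz) as [l Hl]. exists l. apply is_derive_is_cderiv, Hl.
Qed.
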